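(* Let $\{\phi_j\}_{j\in\mathbb Z}$ be the Fourier basis $\phi_j(t)=e^{\mathrm ij\pi t}$, $T=\{t_n\}_{n=1}^N\subseteq[-1,1]$ a set of $N$ scattered data points with density $h$. Then for each $0<\epsilon<1$ there exists $c(\epsilon)>0$ such that if $h\le c(\epsilon)M^{-1}$, then the least-squares problem $\min_z\|UP_Mz-y\|$ over $z$ supported in $\{-M,\dots,M-1\}$ has a unique solution $\check x$, and it satisfies $$\|x-\check x\|\le\left(1+\frac1{\sqrt{1-\epsilon}}\right)\|x-P_Mx\|_{1,w}+\frac1{\sqrt{1-\epsilon}}\eta$$ for any weights $w=\{w_i\}$ with $w_i\ge1$.
   Context: Fourier setting: $D=(-1,1)$, $\nu=1/2$, basis indexed by $\mathbb Z$. $h=\sup_{t\in(-1,1)}\min_n|t-t_n|$; Voronoi cells $V_n=\{t\in(-1,1):|t-t_n|\le|t-t_m|\ \forall m\ne n\}$; $\tau_n=\int_{V_n}\nu$. $U_{n,j}=\sqrt{\tau_n}\phi_j(t_n)$, $j\in\mathbb Z$. $P_M$ is the coordinate projection onto indices $\{-M,\dots,M-1\}$. $\|z\|_{1,w}=\sum_{i\in\mathbb Z}w_i|z_i|$, $\|\cdot\|$ the $\ell^2$ norm. Target $f=\sum_jx_j\phi_j$ with coefficient sequence $x$; data $y=\{\sqrt{\tau_n}(f(t_n)+e_n)\}$, $|e_n|\le\eta$. *)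

From Stdlib Require Import Reals ZArith Lra ClassicalEpsilon.
From Coquelicot Require Import Coquelicot.
Open Scope R_scope.

Definition phi (j : Z) (t : R) : C := (cos (IZR j * PI * t), sin (IZR j * PI * t)).

Fixpoint Csum (f : nat -> C) (n : nat) : C :=
  match n with O => RtoC 0 | S k => Cplus (Csum f k) (f k) end.
Fixpoint Rsum (f : nat -> R) (n : nat) : R :=
  match n with O => 0 | S k => Rsum f k + f k end.

Definition is_zsum (a : Z -> C) (s : C) : Prop :=
  exists s1 s2 : C,
    is_series (fun k : nat => a (Z.of_nat k)) s1 /\
    is_series (fun k : nat => a (- Z.of_nat (S k))%Z) s2 /\
    s = Cplus s1 s2.
Definition ex_zseriesR (a : Z -> R) : Prop :=
  ex_series (fun k : nat => a (Z.of_nat k)) /\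
  ex_series (fun k : nat => a (- Z.of_nat (S k))%Z).
Definition zSeriesR (a : Z -> R) : R :=
  Series (fun k : nat => a (Z.of_nat k)) + Series (fun k : nat => a (- Z.of_nat (S k))%Z).

Definition l2norm (z : Z -> C) : R := sqrt (zSeriesR (fun j => (Cmod (z j))^2)).
Definition w1norm (w : Z -> R) (z : Z -> C) : R := zSeriesR (fun j => w j * Cmod (z j)).

Definition PM (M : nat) (x : Z -> C) : Z -> C :=
  fun j => if andb (Z.leb (- Z.of_nat M) j) (Z.ltb j (Z.of_nat M)) then x j else RtoC 0.
Definition supported_in (M : nat) (z : Z -> C) : Prop :=
  forall j : Z, (j < - Z.of_nat M \/ Z.of_nat M <= j)%Z -> z j = RtoC 0.

Fixpoint mindist (tp : nat -> R) (t : R) (k : nat) : R :=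
  match k with
  | O => Rabs (t - tp O)
  | S k' => Rmin (mindist tp t k') (Rabs (t - tp (S k)))
  end.
Definition density (tp : nat -> R) (N : nat) : Rbar :=
  Lub_Rbar (fun r => exists t, -1 < t < 1 /\ r = mindist tp t (N - 1)).

Definition voronoi (tp : nat -> R) (N n : nat) (t : R) : Prop :=
  -1 < t < 1 /\ forall m : nat, (m < N)%nat -> m <> n -> Rabs (t - tp n) <= Rabs (t - tp m).
Definition indicator (P : R -> Prop) (t : R) : R :=
  if excluded_middle_informative (P t) then 1 else 0.
(* tau_n = int_{V_n} nu, with nu = (1/2) dt on (-1,1) *)
Definition tau (tp : nat -> R) (N n : nat) : R :=
  RInt (fun t => / 2 * indicator (voronoi tp N n) t) (-1) 1.

Definition Umat (tp : nat -> R) (N n : nat) (j : Z) : C :=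
  Cmult (RtoC (sqrt (tau tp N n))) (phi j (tp n)).

Definition UPM (tp : nat -> R) (N M : nat) (z : Z -> C) (n : nat) : C :=
  Csum (fun k => let j := (Z.of_nat k - Z.of_nat M)%Z in Cmult (Umat tp N n j) (z j)) (2 * M).

Definition residual (tp : nat -> R) (N M : nat) (z : Z -> C) (y : nat -> C) : R :=
  sqrt (Rsum (fun n => (Cmod (Cminus (UPM tp N M z n) (y n)))^2) N).

(* The least-squares solution is the orthogonal projection of the data onto the span of the
   sampled Fourier columns, so everything rests on a Marcinkiewicz-Zygmund inequality: every
   trigonometric polynomial T = sum_k a_k phi_k of degree at most M satisfies
   (1 - eps) sum_k |a_k|^2 <= sum_n tau_n |T(t_n)|^2 once h <= eps / (32 pi M).
   For t in the Voronoi cell of t_n, |t - t_n| <= 4h, and T(t_n) - T(t) is expanded in the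
   Taylor series of cos and sin in the shift; the k-th term is a trigonometric polynomial with
   coefficients a_j (j pi)^k, whose L^2 norm Parseval bounds by (M pi)^k times that of T.
   Integrating |T(t_n)|^2 >= (1 - eps/2) |T(t)|^2 - (2/eps) |T(t_n) - T(t)|^2 over the cells
   compares the quadrature sum with the integral of |T|^2.  Then the error x - xc splits into
   the tail x - P_M x and the window part P_M x - xc; the latter is controlled by the residual
   of P_M x, which is at most ||x - P_M x||_1 + eta, and the weights w_i >= 1 dominate the
   l^1 norm. *)

From Stdlib Require Import Reals ZArith Lra Lia ClassicalEpsilon FunctionalExtensionality.
From Coquelicot Require Import Coquelicot.
Open Scope R_scope.

Ltac Ceq := apply injective_projections; simpl; ring.

Lemma Rsum_ext f g n : (forall k, (k < n)%nat -> f k = g k) -> Rsum f n = Rsum g n.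
Proof. induction n; simpl; intros H; auto. rewrite IHn, H; auto. Qed.

Lemma Rsum_plus f g n : Rsum (fun k => f k + g k) n = Rsum f n + Rsum g n.
Proof. induction n; simpl; [lra|]. rewrite IHn; lra. Qed.

Lemma Rsum_scal c f n : Rsum (fun k => c * f k) n = c * Rsum f n.
Proof. induction n; simpl; [lra|]. rewrite IHn; lra. Qed.

Lemma Rsum_opp f n : Rsum (fun k => - f k) n = - Rsum f n.
Proof. induction n; simpl; [lra|]. rewrite IHn; lra. Qed.

Lemma Rsum_le f g n : (forall k, (k < n)%nat -> f k <= g k) -> Rsum f n <= Rsum g n.
Proof.
  induction n; simpl; intros H; [lra|].
  specialize (IHn (fun k Hk => H k ltac:(lia))). specialize (H n ltac:(lia)); lra.
Qed.

Lemma Rsum_zero f n : (forall k, (k < n)%nat -> f k = 0) -> Rsum f n = 0.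
Proof.
  induction n; simpl; intros H; auto.
  rewrite IHn, (H n); [lra|lia|]. intros; apply H; lia.
Qed.

Lemma Rsum_nonneg f n : (forall k, (k < n)%nat -> 0 <= f k) -> 0 <= Rsum f n.
Proof. intros H. rewrite <- (Rsum_zero (fun _ => 0) n) by auto. apply Rsum_le; auto. Qed.

Lemma Rsum_split f a b : Rsum f (a + b) = Rsum f a + Rsum (fun k => f (a + k)%nat) b.
Proof.
  induction b; simpl. rewrite Nat.add_0_r; lra.
  rewrite Nat.add_succ_r; simpl; rewrite IHb; lra.
Qed.

Lemma Rsum_rev f n : Rsum (fun k => f (n - 1 - k)%nat) n = Rsum f n.
Proof.
  induction n; auto.
  change (S n) with (1 + n)%nat at 2. rewrite Rsum_split. simpl Rsum at 1.
  rewrite (Rsum_ext (fun k => f (S n - 1 - (1 + k))%nat) (fun k => f (n - 1 - k)%nat)).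
  - rewrite IHn. simpl. replace (n - 0 - 0)%nat with n by lia. lra.
  - intros; f_equal; lia.
Qed.

Lemma Rsum_pairs f m : Rsum (fun i => f (2 * i)%nat + f (2 * i + 1)%nat) m = Rsum f (2 * m).
Proof.
  induction m; auto.
  replace (2 * S m)%nat with (S (S (2 * m))) by lia.
  change (Rsum (fun i => f (2 * i)%nat + f (2 * i + 1)%nat) m + (f (2 * m)%nat + f (2 * m + 1)%nat)
          = Rsum f (2 * m) + f (2 * m)%nat + f (S (2 * m))).
  rewrite IHm. replace (2 * m + 1)%nat with (S (2 * m)) by lia. lra.
Qed.

Lemma Rsum_term_le f n m : (forall k, (k < n)%nat -> 0 <= f k) -> (m < n)%nat -> f m <= Rsum f n.
Proof.
  induction n; intros H Hm; [lia|]. simpl.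
  assert (0 <= Rsum f n) by (apply Rsum_nonneg; intros; apply H; lia).
  destruct (Nat.eq_dec m n). { subst; lra. }
  assert (f m <= Rsum f n) by (apply IHn; [intros; apply H|]; lia).
  specialize (H n ltac:(lia)). lra.
Qed.

Lemma Rsum_Cmod_sqr_eq_0 (a : nat -> C) n :
  Rsum (fun k => Cmod (a k) ^ 2) n = 0 -> forall k, (k < n)%nat -> a k = RtoC 0.
Proof.
  intros H k Hk. apply Cmod_eq_0.
  assert (Cmod (a k) ^ 2 <= 0).
  { rewrite <- H. apply (Rsum_term_le (fun k => Cmod (a k) ^ 2)); auto. intros; apply pow2_ge_0. }
  pose proof (Cmod_ge_0 (a k)). nra.
Qed.

Lemma Rsum_kronecker n k c :
  (k < n)%nat -> Rsum (fun l => if Nat.eq_dec l k then c else 0) n = c.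
Proof.
  induction n; intros H; [lia|]. simpl. destruct (Nat.eq_dec n k).
  - subst. rewrite Rsum_zero; [lra|]. intros; destruct (Nat.eq_dec k0 k); auto; lia.
  - rewrite IHn; [lra|lia].
Qed.

Lemma Rsum_drop_first f n :
  (0 < n)%nat -> Rsum (fun i => if Nat.eq_dec i 0 then 0 else f i) n = Rsum f n - f 0%nat.
Proof.
  induction n; intros H; [lia|]. destruct (Nat.eq_dec n 0).
  - subst; simpl; destruct (Nat.eq_dec 0 0); [lra|congruence].
  - simpl. rewrite IHn by lia. destruct (Nat.eq_dec n 0); [lia|lra].
Qed.

Lemma Csum_ext f g n : (forall k, (k < n)%nat -> f k = g k) -> Csum f n = Csum g n.
Proof. induction n; simpl; intros H; auto. rewrite IHn, H; auto. Qed.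

Lemma Csum_plus f g n : Csum (fun k => Cplus (f k) (g k)) n = Cplus (Csum f n) (Csum g n).
Proof. induction n; simpl. Ceq. rewrite IHn. ring. Qed.

Lemma Csum_minus f g n : Csum (fun k => Cminus (f k) (g k)) n = Cminus (Csum f n) (Csum g n).
Proof. induction n; simpl. Ceq. rewrite IHn. ring. Qed.

Lemma Csum_scal c f n : Csum (fun k => Cmult c (f k)) n = Cmult c (Csum f n).
Proof. induction n; simpl. Ceq. rewrite IHn. ring. Qed.

Lemma Csum_zero f n : (forall k, (k < n)%nat -> f k = RtoC 0) -> Csum f n = RtoC 0.
Proof.
  induction n; simpl; intros H; auto.
  rewrite IHn, H; [Ceq|lia|]. intros; apply H; lia.
Qed.

Lemma Csum_swap (F : nat -> nat -> C) n m :
  Csum (fun i => Csum (fun j => F i j) m) n = Csum (fun j => Csum (fun i => F i j) n) m.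
Proof.
  induction n; simpl.
  - symmetry; apply Csum_zero; auto.
  - rewrite IHn, <- Csum_plus. auto.
Qed.

Lemma Csum_mult f g n m :
  Cmult (Csum f n) (Csum g m) = Csum (fun i => Csum (fun j => Cmult (f i) (g j)) m) n.
Proof. induction n; simpl. Ceq. rewrite <- IHn, Csum_scal. ring. Qed.

Lemma Csum_conj f n : Cconj (Csum f n) = Csum (fun k => Cconj (f k)) n.
Proof. induction n; simpl. Ceq. rewrite Cplus_conj, IHn; auto. Qed.

Lemma Csum_split f a b : Csum f (a + b) = Cplus (Csum f a) (Csum (fun k => f (a + k)%nat) b).
Proof.
  induction b; simpl. rewrite Nat.add_0_r. Ceq.
  rewrite Nat.add_succ_r; simpl; rewrite IHb. ring.
Qed.

Lemma Csum_re f n : fst (Csum f n) = Rsum (fun k => fst (f k)) n.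
Proof. induction n; simpl; auto. rewrite IHn; auto. Qed.

Lemma Csum_im f n : snd (Csum f n) = Rsum (fun k => snd (f k)) n.
Proof. induction n; simpl; auto. rewrite IHn; auto. Qed.

Lemma RtoC_Rsum f n : RtoC (Rsum f n) = Csum (fun k => RtoC (f k)) n.
Proof. induction n; simpl; auto. rewrite <- IHn. unfold RtoC; Ceq. Qed.

Lemma Cmod_Csum_le f n : Cmod (Csum f n) <= Rsum (fun k => Cmod (f k)) n.
Proof.
  induction n; simpl. rewrite Cmod_0; lra.
  eapply Rle_trans. apply Cmod_triangle. lra.
Qed.

Lemma Cmod_Csum_scal_le (r : nat -> R) (A : nat -> C) (b : nat -> R) m :
  (forall i, (i < m)%nat -> Rabs (r i) * Cmod (A i) <= b i) ->
  Cmod (Csum (fun i => Cmult (RtoC (r i)) (A i)) m) <= Rsum b m.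
Proof.
  intros H. eapply Rle_trans. apply Cmod_Csum_le.
  apply Rsum_le; intros i Hi. rewrite Cmod_mult, Cmod_R. auto.
Qed.

Lemma Cmod_sqr_Cmult_conj (c : C) : Cmod c ^ 2 = fst (Cmult c (Cconj c)).
Proof. rewrite Cmod2_alt. destruct c; simpl. unfold Re, Im; simpl. ring. Qed.

(** * Trigonometric polynomials and Parseval's identity *)

Lemma is_RInt_Rplus f g a b If Ig :
  is_RInt f a b If -> is_RInt g a b Ig -> is_RInt (fun x => f x + g x) a b (If + Ig).
Proof. exact (is_RInt_plus f g a b If Ig). Qed.

Lemma is_RInt_Rscal f a b c If : is_RInt f a b If -> is_RInt (fun x => c * f x) a b (c * If).
Proof. exact (is_RInt_scal f a b c If). Qed.

Lemma is_RInt_Rconst a b c : is_RInt (fun _ => c) a b ((b - a) * c).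
Proof. exact (is_RInt_const a b c). Qed.

Lemma is_RInt_R0 a b : is_RInt (fun _ => 0) a b 0.
Proof. pose proof (is_RInt_Rconst a b 0) as H. rewrite Rmult_0_r in H. exact H. Qed.

Lemma is_RInt_Rminus f g a b If Ig :
  is_RInt f a b If -> is_RInt g a b Ig -> is_RInt (fun x => f x - g x) a b (If - Ig).
Proof.
  intros Hf Hg. apply (is_RInt_ext (fun x => f x + (-1) * g x)); [intros; lra|].
  replace (If - Ig) with (If + (-1) * Ig) by lra.
  apply is_RInt_Rplus; auto. apply is_RInt_Rscal; auto.
Qed.

Lemma is_RInt_Rsum (F : nat -> R -> R) (v : nat -> R) a b n :
  (forall k, (k < n)%nat -> is_RInt (F k) a b (v k)) ->
  is_RInt (fun t => Rsum (fun k => F k t) n) a b (Rsum v n).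
Proof.
  induction n; intros H; simpl. apply is_RInt_R0.
  apply is_RInt_Rplus. apply IHn; intros; apply H; lia. apply H; lia.
Qed.

Lemma is_RInt_cos_int_PI (d : Z) :
  is_RInt (fun t => cos (IZR d * PI * t)) (-1) 1 (if Z.eq_dec d 0 then 2 else 0).
Proof.
  destruct (Z.eq_dec d 0) as [->|Hd].
  - apply (is_RInt_ext (fun _ => 1)). intros; rewrite Rmult_0_l, Rmult_0_l, cos_0; auto.
    replace 2 with ((1 - -1) * 1) by lra. apply is_RInt_Rconst.
  - assert (Hd' : IZR d <> 0) by (apply not_0_IZR; auto).
    pose proof PI_neq0.
    set (F := fun t => sin (IZR d * PI * t) / (IZR d * PI)).
    replace 0 with (minus (F 1) (F (-1))).
    + apply (is_RInt_derive F).
      * intros ? ?. unfold F. auto_derive; [tauto|field; tauto].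
      * intros ? ?. apply (ex_derive_continuous (fun t => cos (IZR d * PI * t))). auto_derive; auto.
    + unfold F, minus, plus, opp; simpl.
      rewrite Rmult_1_r, (sin_eq_0_1 (IZR d * PI)) by (exists d; auto).
      rewrite (sin_eq_0_1 (IZR d * PI * -1)) by (exists (-d)%Z; rewrite opp_IZR; ring).
      unfold Rdiv; ring.
Qed.

Lemma is_RInt_sin_int_PI (d : Z) : is_RInt (fun t => sin (IZR d * PI * t)) (-1) 1 0.
Proof.
  destruct (Z.eq_dec d 0) as [->|Hd].
  - apply (is_RInt_ext (fun _ => 0)). intros; rewrite Rmult_0_l, Rmult_0_l, sin_0; auto.
    apply is_RInt_R0.
  - assert (Hd' : IZR d <> 0) by (apply not_0_IZR; auto).
    pose proof PI_neq0.
    set (F := fun t => - cos (IZR d * PI * t) / (IZR d * PI)).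
    replace 0 with (minus (F 1) (F (-1))).
    + apply (is_RInt_derive F).
      * intros ? ?. unfold F. auto_derive; [tauto|field; tauto].
      * intros ? ?. apply (ex_derive_continuous (fun t => sin (IZR d * PI * t))). auto_derive; auto.
    + unfold F, minus, plus, opp; simpl.
      replace (IZR d * PI * -1) with (- (IZR d * PI * 1)) by ring. rewrite cos_neg.
      unfold Rdiv; ring.
Qed.

Lemma Cmod_phi j t : Cmod (phi j t) = 1.
Proof.
  unfold Cmod, phi; simpl. pose proof (sin2_cos2 (IZR j * PI * t)) as H. unfold Rsqr in H.
  replace (_ + _) with 1 by lra. apply sqrt_1.
Qed.

Lemma phi_add j t s : phi j (t + s) = Cmult (phi j t) (cos (IZR j * PI * s), sin (IZR j * PI * s)).
Proof.
  unfold phi. replace (IZR j * PI * (t + s)) with (IZR j * PI * t + IZR j * PI * s) by ring.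
  rewrite cos_plus, sin_plus. Ceq.
Qed.

(* Coefficient [a k] sits at frequency [g k]; for the columns of [U P_M], [g k = k - M]. *)
Definition trig_poly (a : nat -> C) (g : nat -> Z) (K : nat) (t : R) : C :=
  Csum (fun k => Cmult (a k) (phi (g k) t)) K.

Lemma Cmod_trig_poly_sqr a g K t :
  Cmod (trig_poly a g K t) ^ 2 =
  Rsum (fun k => Rsum (fun l =>
     fst (Cmult (a k) (Cconj (a l))) * cos (IZR (g k - g l) * PI * t)
   - snd (Cmult (a k) (Cconj (a l))) * sin (IZR (g k - g l) * PI * t)) K) K.
Proof.
  rewrite Cmod_sqr_Cmult_conj. unfold trig_poly. rewrite Csum_conj, Csum_mult, Csum_re.
  apply Rsum_ext; intros k _. rewrite Csum_re. apply Rsum_ext; intros l _.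
  rewrite minus_IZR.
  replace ((IZR (g k) - IZR (g l)) * PI * t) with (IZR (g k) * PI * t - IZR (g l) * PI * t) by ring.
  rewrite cos_minus, sin_minus. destruct (a k) as [u v], (a l) as [u' v'].
  unfold phi; simpl. ring.
Qed.

Lemma is_RInt_trig_poly_sqr a g K :
  (forall k l, (k < K)%nat -> (l < K)%nat -> g k = g l -> k = l) ->
  is_RInt (fun t => Cmod (trig_poly a g K t) ^ 2) (-1) 1 (2 * Rsum (fun k => Cmod (a k) ^ 2) K).
Proof.
  intros Hinj. eapply is_RInt_ext. { intros; symmetry; apply Cmod_trig_poly_sqr. }
  replace (2 * Rsum (fun k => Cmod (a k) ^ 2) K) with
   (Rsum (fun k => Rsum (fun l => fst (Cmult (a k) (Cconj (a l))) *
        (if Z.eq_dec (g k - g l) 0 then 2 else 0) - snd (Cmult (a k) (Cconj (a l))) * 0) K) K).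
  - apply is_RInt_Rsum; intros k Hk. apply is_RInt_Rsum; intros l Hl.
    apply is_RInt_Rminus; apply is_RInt_Rscal.
    + apply is_RInt_cos_int_PI.
    + apply is_RInt_sin_int_PI.
  - rewrite <- Rsum_scal. apply Rsum_ext; intros k Hk.
    rewrite (Rsum_ext _ (fun l => if Nat.eq_dec l k then 2 * Cmod (a k) ^ 2 else 0)).
    { apply Rsum_kronecker; auto. }
    intros l Hl. destruct (Nat.eq_dec l k).
    + subst. destruct (Z.eq_dec (g k - g k) 0); [|lia]. rewrite Cmod_sqr_Cmult_conj. ring.
    + destruct (Z.eq_dec (g k - g l) 0); [|ring].
      exfalso; apply n; symmetry; apply Hinj; auto; lia.
Qed.

(** * Voronoi cells of distinct points of [-1,1] *)

(* The cell of [tp n] among [tp 0 .. tp (k-1)] is the interval between the largest midpoint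
   to its left and the smallest midpoint to its right, clipped to [-1,1]. *)
Fixpoint cell_left (tp : nat -> R) (n k : nat) : R :=
  match k with
  | O => -1
  | S k' => if Rlt_dec (tp k') (tp n) then Rmax (cell_left tp n k') ((tp k' + tp n) / 2)
            else cell_left tp n k'
  end.

Fixpoint cell_right (tp : nat -> R) (n k : nat) : R :=
  match k with
  | O => 1
  | S k' => if Rlt_dec (tp n) (tp k') then Rmin (cell_right tp n k') ((tp k' + tp n) / 2)
            else cell_right tp n k'
  end.

Lemma closer_right_iff a b t : a < b -> (Rabs (t - b) <= Rabs (t - a) <-> (a + b) / 2 <= t).
Proof. intros H. unfold Rabs; destruct (Rcase_abs (t - b)), (Rcase_abs (t - a)); split; intro; lra. Qed.

Lemma closer_left_iff a b t : b < a -> (Rabs (t - b) <= Rabs (t - a) <-> t <= (a + b) / 2).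
Proof. intros H. unfold Rabs; destruct (Rcase_abs (t - b)), (Rcase_abs (t - a)); split; intro; lra. Qed.

Lemma cell_left_le_iff tp n k t : cell_left tp n k <= t <->
  (-1 <= t /\ forall m, (m < k)%nat -> tp m < tp n -> (tp m + tp n)/2 <= t).
Proof.
  induction k; simpl.
  - split. intros; split; auto; intros; lia. tauto.
  - destruct (Rlt_dec (tp k) (tp n)).
    + unfold Rmax; destruct (Rle_dec (cell_left tp n k) ((tp k + tp n) / 2)); split; intros H.
      * assert (cell_left tp n k <= t) by lra. apply IHk in H0. destruct H0; split; auto.
        intros m Hm Hlt. destruct (Nat.eq_dec m k). subst; lra. apply H1; auto; lia.
      * destruct H. apply H0; auto.
      * assert (H0 := H). apply IHk in H0. destruct H0; split; auto.
        intros m Hm Hlt. destruct (Nat.eq_dec m k). subst; lra. apply H1; auto; lia.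
      * apply IHk. destruct H; split; auto.
    + rewrite IHk. split; intros [H1 H2]; split; auto.
      intros m Hm Hlt. destruct (Nat.eq_dec m k). subst; lra. apply H2; auto; lia.
Qed.

Lemma le_cell_right_iff tp n k t : t <= cell_right tp n k <->
  (t <= 1 /\ forall m, (m < k)%nat -> tp n < tp m -> t <= (tp m + tp n)/2).
Proof.
  induction k; simpl.
  - split. intros; split; auto; intros; lia. tauto.
  - destruct (Rlt_dec (tp n) (tp k)).
    + unfold Rmin; destruct (Rle_dec (cell_right tp n k) ((tp k + tp n) / 2)); split; intros H.
      * assert (H0 := H). apply IHk in H0. destruct H0; split; auto.
        intros m Hm Hlt. destruct (Nat.eq_dec m k). subst; lra. apply H1; auto; lia.
      * apply IHk. destruct H; split; auto.
      * assert (t <= cell_right tp n k) by lra. apply IHk in H0. destruct H0; split; auto.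
        intros m Hm Hlt. destruct (Nat.eq_dec m k). subst; lra. apply H1; auto; lia.
      * destruct H. apply H0; auto.
    + rewrite IHk. split; intros [H1 H2]; split; auto.
      intros m Hm Hlt. destruct (Nat.eq_dec m k). subst; lra. apply H2; auto; lia.
Qed.

Lemma is_RInt_interval_indicator (f : R -> R) a b : -1 <= a -> a <= b -> b <= 1 ->
  (forall t, -1 < t < a -> f t = 0) -> (forall t, a < t < b -> f t = 1) ->
  (forall t, b < t < 1 -> f t = 0) -> is_RInt f (-1) 1 (b - a).
Proof.
  intros H1 H2 H3 Ha Hab Hb.
  assert (I1 : is_RInt f (-1) a 0).
  { apply (is_RInt_ext (fun _ => 0)). intros x Hx. rewrite Rmin_left, Rmax_right in Hx by lra.
    symmetry; apply Ha; lra.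
    apply is_RInt_R0. }
  assert (I2 : is_RInt f a b (b - a)).
  { apply (is_RInt_ext (fun _ => 1)). intros x Hx. rewrite Rmin_left, Rmax_right in Hx by lra.
    symmetry; apply Hab; lra.
    pose proof (is_RInt_Rconst a b 1) as H0; rewrite Rmult_1_r in H0; exact H0. }
  assert (I3 : is_RInt f b 1 0).
  { apply (is_RInt_ext (fun _ => 0)). intros x Hx. rewrite Rmin_left, Rmax_right in Hx by lra.
    symmetry; apply Hb; lra.
    apply is_RInt_R0. }
  pose proof (is_RInt_Chasles f a b 1 _ _ I2 I3) as I23.
  pose proof (is_RInt_Chasles f (-1) a 1 _ _ I1 I23) as I.
  replace (b - a) with (plus 0 (plus (b - a) 0)); auto.
  unfold plus; simpl; lra.
Qed.

Section Voronoi.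
Variables (tp : nat -> R) (N : nat).
Hypothesis Hrange : forall n, (n < N)%nat -> -1 <= tp n <= 1.
Hypothesis Hinj : forall n m, (n < N)%nat -> (m < N)%nat -> tp n = tp m -> n = m.

Lemma voronoi_iff n t : (n < N)%nat ->
  (voronoi tp N n t <-> (-1 < t < 1 /\ cell_left tp n N <= t <= cell_right tp n N)).
Proof.
  intros Hn. unfold voronoi. split.
  - intros [Ht H]. split; auto. split.
    + apply cell_left_le_iff. split; [lra|]. intros m Hm Hlt.
      apply (closer_right_iff (tp m) (tp n) t Hlt). apply H; auto. intro; subst; lra.
    + apply le_cell_right_iff. split; [lra|]. intros m Hm Hlt.
      apply (closer_left_iff (tp m) (tp n) t Hlt). apply H; auto. intro; subst; lra.
  - intros [Ht [H1 H2]]. split; auto. intros m Hm Hmn.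
    apply cell_left_le_iff in H1; apply le_cell_right_iff in H2.
    destruct (Rtotal_order (tp m) (tp n)) as [Hl|[He|Hg]].
    + apply (closer_right_iff (tp m) (tp n) t Hl). apply H1; auto.
    + exfalso; apply Hmn; apply Hinj; auto.
    + apply (closer_left_iff (tp m) (tp n) t Hg). apply H2; auto.
Qed.

Lemma cell_left_bounds n k : (n < N)%nat -> -1 <= cell_left tp n k <= tp n.
Proof.
  intros Hn. induction k; simpl. specialize (Hrange n Hn); lra.
  destruct (Rlt_dec (tp k) (tp n)); auto.
  unfold Rmax; destruct (Rle_dec (cell_left tp n k) ((tp k + tp n) / 2)); lra.
Qed.

Lemma cell_right_bounds n k : (n < N)%nat -> tp n <= cell_right tp n k <= 1.
Proof.
  intros Hn. induction k; simpl. specialize (Hrange n Hn); lra.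
  destruct (Rlt_dec (tp n) (tp k)); auto.
  unfold Rmin; destruct (Rle_dec (cell_right tp n k) ((tp k + tp n) / 2)); lra.
Qed.

Lemma mid_le_cell_left n m k : (m < k)%nat -> tp m < tp n -> (tp m + tp n)/2 <= cell_left tp n k.
Proof.
  induction k; intros Hm Hlt; [lia|]. simpl.
  destruct (Nat.eq_dec m k).
  - subst k. destruct (Rlt_dec (tp m) (tp n)); [|lra]. apply Rmax_r.
  - destruct (Rlt_dec (tp k) (tp n)). eapply Rle_trans; [|apply Rmax_l]. apply IHk; auto; lia.
    apply IHk; auto; lia.
Qed.

Lemma cell_right_le_mid n m k : (m < k)%nat -> tp n < tp m -> cell_right tp n k <= (tp m + tp n)/2.
Proof.
  induction k; intros Hm Hlt; [lia|]. simpl.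
  destruct (Nat.eq_dec m k).
  - subst k. destruct (Rlt_dec (tp n) (tp m)); [|lra]. apply Rmin_r.
  - destruct (Rlt_dec (tp n) (tp k)). eapply Rle_trans; [apply Rmin_l|]. apply IHk; auto; lia.
    apply IHk; auto; lia.
Qed.

Lemma is_RInt_indicator_voronoi n : (n < N)%nat ->
  is_RInt (indicator (voronoi tp N n)) (-1) 1 (cell_right tp n N - cell_left tp n N).
Proof.
  intros Hn. pose proof (cell_left_bounds n N Hn). pose proof (cell_right_bounds n N Hn).
  apply is_RInt_interval_indicator; try lra; intros t Ht; unfold indicator;
  destruct (excluded_middle_informative (voronoi tp N n t)) as [V|V]; auto;
  try (apply (voronoi_iff n t Hn) in V; lra).
  exfalso; apply V. apply (voronoi_iff n t Hn). lra.
Qed.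

Lemma tau_eq n : (n < N)%nat -> tau tp N n = (cell_right tp n N - cell_left tp n N) / 2.
Proof.
  intros Hn. unfold tau. apply is_RInt_unique.
  replace ((cell_right tp n N - cell_left tp n N) / 2)
    with (/2 * (cell_right tp n N - cell_left tp n N)) by lra.
  apply is_RInt_Rscal. apply is_RInt_indicator_voronoi; auto.
Qed.

Lemma tau_nonneg n : (n < N)%nat -> 0 <= tau tp N n.
Proof.
  intros Hn. rewrite tau_eq; auto.
  pose proof (cell_left_bounds n N Hn). pose proof (cell_right_bounds n N Hn). lra.
Qed.

Definition open_cell n t :=
  if Rlt_dec (cell_left tp n N) t then if Rlt_dec t (cell_right tp n N) then 1 else 0 else 0.

Lemma open_cell_01 n t : open_cell n t = 0 \/ open_cell n t = 1.
Proof.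
  unfold open_cell; destruct Rlt_dec; [destruct Rlt_dec|]; auto.
Qed.

Lemma open_cells_disjoint n m t : (n < N)%nat -> (m < N)%nat -> n <> m ->
  open_cell n t = 1 -> open_cell m t = 1 -> False.
Proof.
  unfold open_cell; intros Hn Hm Hnm.
  destruct (Rlt_dec (cell_left tp n N) t); [destruct (Rlt_dec t (cell_right tp n N))|];
    try lra; intros _;
  destruct (Rlt_dec (cell_left tp m N) t); [destruct (Rlt_dec t (cell_right tp m N))|];
    try lra; intros _.
  destruct (Rtotal_order (tp m) (tp n)) as [Hl|[He|Hg]].
  - pose proof (mid_le_cell_left n m N Hm Hl). pose proof (cell_right_le_mid m n N Hn Hl). lra.
  - apply Hnm; apply Hinj; auto.
  - pose proof (mid_le_cell_left m n N Hn Hg). pose proof (cell_right_le_mid n m N Hm Hg). lra.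
Qed.

Lemma Rsum_open_cell_le_1 t k : (k <= N)%nat -> Rsum (fun n => open_cell n t) k <= 1.
Proof.
  induction k; intros Hk; simpl; [lra|].
  destruct (open_cell_01 k t) as [H|H]; rewrite H.
  - specialize (IHk ltac:(lia)); lra.
  - rewrite Rsum_zero. lra. intros m Hm. destruct (open_cell_01 m t); auto.
    exfalso; apply (open_cells_disjoint k m t); auto; lia.
Qed.

Lemma Rsum_cell_length_le : Rsum (fun n => cell_right tp n N - cell_left tp n N) N <= 2.
Proof.
  assert (I : is_RInt (fun t => Rsum (fun n => open_cell n t) N) (-1) 1
                      (Rsum (fun n => cell_right tp n N - cell_left tp n N) N)).
  { apply is_RInt_Rsum. intros n Hn.
    pose proof (cell_left_bounds n N Hn). pose proof (cell_right_bounds n N Hn).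
    apply is_RInt_interval_indicator; try lra; intros t Ht; unfold open_cell;
    repeat destruct Rlt_dec; lra. }
  rewrite <- (is_RInt_unique _ _ _ _ I).
  replace 2 with (RInt (fun _ => 1) (-1) 1).
  apply RInt_le. lra. eexists; eauto. eexists; apply is_RInt_Rconst.
  intros t Ht. apply Rsum_open_cell_le_1; lia.
  apply is_RInt_unique. replace 2 with ((1 - -1) * 1) by lra. apply is_RInt_Rconst.
Qed.

Lemma Rsum_tau_le_1 : Rsum (fun n => tau tp N n) N <= 1.
Proof.
  rewrite (Rsum_ext _ (fun n => /2 * (cell_right tp n N - cell_left tp n N))).
  rewrite Rsum_scal. pose proof Rsum_cell_length_le. lra.
  intros; rewrite tau_eq; auto; lra.
Qed.

Lemma is_RInt_voronoi_weighted_sum (v : nat -> R) :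
  is_RInt (fun t => Rsum (fun n => indicator (voronoi tp N n) t * v n) N) (-1) 1
          (2 * Rsum (fun n => tau tp N n * v n) N).
Proof.
  replace (2 * Rsum (fun n => tau tp N n * v n) N)
    with (Rsum (fun n => v n * (cell_right tp n N - cell_left tp n N)) N).
  - apply is_RInt_Rsum. intros n Hn.
    apply (is_RInt_ext (fun t => v n * indicator (voronoi tp N n) t)); [intros; apply Rmult_comm|].
    apply is_RInt_Rscal, is_RInt_indicator_voronoi; auto.
  - rewrite <- Rsum_scal. apply Rsum_ext; intros n Hn. rewrite tau_eq; auto. field.
Qed.

End Voronoi.



(* [mindist tp t k] ranges over the indices 0, 2, 3, ..., k+1: it skips [tp 1] and, for
   [k = N - 1], includes the index [N] outside the data set. *)
Lemma mindist_attained tp t k : exists i, (i <= S k)%nat /\ mindist tp t k = Rabs (t - tp i).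
Proof.
  induction k.
  - exists 0%nat; simpl; auto.
  - destruct IHk as [n [Hn Heq]]. simpl. unfold Rmin.
    destruct (Rle_dec (mindist tp t k) (Rabs (t - tp (S (S k))))).
    + exists n; split; auto; lia.
    + exists (S (S k)); split; auto; lia.
Qed.

Lemma exists_argmin_nat (F : nat -> R) N : (0 < N)%nat ->
  exists n, (n < N)%nat /\ forall m, (m < N)%nat -> F n <= F m.
Proof.
  induction N; intros H; [lia|]. destruct (Nat.eq_dec N 0).
  - subst; exists 0%nat; split; auto; intros m Hm; replace m with 0%nat by lia; lra.
  - destruct IHN as [n0 [Hn Hle]]; [lia|].
    destruct (Rle_dec (F n0) (F N)).
    + exists n0; split; [lia|]. intros m Hm; destruct (Nat.eq_dec m N); [subst; auto|apply Hle; lia].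
    + exists N; split; [lia|]. intros m Hm; destruct (Nat.eq_dec m N); [subst; lra|].
      specialize (Hle m ltac:(lia)); lra.
Qed.

Lemma mindist_le_density tp N t h0 :
  Rbar_le (density tp N) (Finite h0) -> -1 < t < 1 -> mindist tp t (N - 1) <= h0.
Proof.
  intros Hd Ht.
  destruct (Lub_Rbar_correct (fun r => exists t, -1 < t < 1 /\ r = mindist tp t (N - 1))) as [Hub _].
  assert (H : Rbar_le (mindist tp t (N - 1)) (density tp N)) by (apply Hub; exists t; split; auto).
  exact (Rbar_le_trans _ _ _ H Hd).
Qed.

(* If the nearest index found by [mindist] is the spurious [N], move to the point [u] at
   distance [3 h0] from [t]: its nearest index is within [h0] of [u], hence not [N]. *)
Lemma exists_data_point_near tp N t h0 : (0 < N)%nat -> 0 < h0 < 1/3 ->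
  Rbar_le (density tp N) (Finite h0) -> -1 < t < 1 ->
  exists q, (q < N)%nat /\ Rabs (t - tp q) <= 4 * h0.
Proof.
  intros HN Hh Hd Ht.
  destruct (mindist_attained tp t (N - 1)) as [i [Hi Heq]].
  pose proof (mindist_le_density tp N t h0 Hd Ht) as Hm.
  destruct (Nat.lt_ge_cases i N). { exists i; split; auto. lra. }
  set (u := if Rlt_dec (t + 3 * h0) 1 then t + 3 * h0 else t - 3 * h0).
  assert (Hu : -1 < u < 1 /\ Rabs (u - t) = 3 * h0).
  { unfold u; destruct Rlt_dec; split; try (unfold Rabs; destruct Rcase_abs); lra. }
  destruct (mindist_attained tp u (N - 1)) as [i' [Hi' Heq']].
  pose proof (mindist_le_density tp N u h0 Hd (proj1 Hu)) as Hm'.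
  assert (Htri : forall a b c, Rabs (a - c) <= Rabs (a - b) + Rabs (b - c)).
  { intros a b c. replace (a - c) with ((a - b) + (b - c)) by ring. apply Rabs_triang. }
  destruct (Nat.lt_ge_cases i' N).
  - exists i'; split; auto. pose proof (Htri t u (tp i')). rewrite Rabs_minus_sym in Hu. lra.
  - exfalso. replace i with N in Heq by lia. replace i' with N in Heq' by lia.
    pose proof (Htri u (tp N) t). rewrite (Rabs_minus_sym (tp N)) in H1. lra.
Qed.

Lemma exists_voronoi_near tp N t h0 : (0 < N)%nat -> 0 < h0 < 1/3 ->
  Rbar_le (density tp N) (Finite h0) -> -1 < t < 1 ->
  exists n, (n < N)%nat /\ voronoi tp N n t /\ Rabs (t - tp n) <= 4 * h0.
Proof.
  intros HN Hh Hd Ht.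
  destruct (exists_data_point_near tp N t h0 HN Hh Hd Ht) as [q [Hq Hqle]].
  destruct (exists_argmin_nat (fun m => Rabs (t - tp m)) N HN) as [n [Hn Hle]].
  exists n; split; auto; split.
  - split; [auto|]. intros m Hm _. apply Hle; auto.
  - specialize (Hle q Hq). simpl in Hle. lra.
Qed.

(** * Truncated Taylor series of cos and sin *)

Lemma sum_f_R0_Rsum f n : sum_f_R0 f n = Rsum f (S n).
Proof. induction n; simpl; auto. lra. rewrite IHn; simpl; auto. Qed.

Lemma PI_gt_3 : 3 < PI.
Proof. pose proof PI2_3_2. lra. Qed.

Lemma pow_half_antitone n m : (n <= m)%nat -> (1/2) ^ m <= (1/2) ^ n.
Proof.
  intros H. replace m with (n + (m - n))%nat by lia. rewrite pow_add.
  assert (0 < (1/2) ^ n) by (apply pow_lt; lra).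
  assert ((1/2) ^ (m - n) <= 1)
    by (pose proof (pow_incr (1/2) 1 (m - n) ltac:(lra)) as H1; rewrite pow1 in H1; auto).
  nra.
Qed.

Lemma Rabs_pow_div_fact_le x h k : Rabs x <= h -> Rabs (x ^ k / INR (fact k)) <= h ^ k.
Proof.
  intros H. assert (1 <= INR (fact k))
    by (replace 1 with (INR 1) by auto; apply le_INR; pose proof (lt_O_fact k); lia).
  unfold Rdiv. rewrite Rabs_mult, Rabs_inv, <- RPow_abs, (Rabs_right (INR _)) by lra.
  assert (Rabs x ^ k <= h ^ k) by (apply pow_incr; split; [apply Rabs_pos|auto]).
  assert (0 <= Rabs x ^ k) by (apply pow_le; apply Rabs_pos).
  assert (0 < / INR (fact k) <= 1).
  { split. apply Rinv_0_lt_compat; lra. rewrite <- Rinv_1. apply Rinv_le_contravar; lra. }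
  nra.
Qed.

Lemma Rabs_alt_pow_div_fact_le s h j k :
  Rabs s <= h -> Rabs ((-1) ^ j * (s ^ k / INR (fact k))) <= h ^ k.
Proof. intros H. rewrite Rabs_mult, pow_1_abs, Rmult_1_l. apply Rabs_pow_div_fact_le; auto. Qed.

Lemma cos_approx_error_le x n0 :
  Rabs x <= 1/2 -> Rabs (cos x - cos_approx x (2 * n0 + 1)) <= (1/2) ^ n0.
Proof.
  intros H. pose proof PI_gt_3.
  assert (Hx : - PI / 2 <= x <= PI / 2) by (unfold Rabs in H; destruct Rcase_abs; lra).
  destruct (cos_bound x n0) as [H1 H2]; try lra.
  replace (2 * (n0 + 1))%nat with (S (2 * n0 + 1)) in H2 by lia.
  unfold cos_approx in *. rewrite tech5 in H2.
  assert (Rabs (cos_term x (S (2 * n0 + 1))) <= (1/2) ^ n0).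
  { unfold cos_term. eapply Rle_trans. apply Rabs_alt_pow_div_fact_le; eauto.
    apply pow_half_antitone; lia. }
  pose proof (Rle_abs (cos_term x (S (2 * n0 + 1)))).
  unfold Rabs at 1; destruct Rcase_abs; lra.
Qed.

Lemma sin_approx_opp x n : sin_approx (- x) n = - sin_approx x n.
Proof.
  assert (Hterm : forall i, sin_term (- x) i = - sin_term x i).
  { intros i. unfold sin_term. replace (2 * i + 1)%nat with (S (2 * i)) by lia.
    rewrite <- !tech_pow_Rmult, !pow_mult. replace ((- x) ^ 2) with (x ^ 2) by ring.
    unfold Rdiv; ring. }
  unfold sin_approx. induction n; simpl. apply Hterm. rewrite IHn, Hterm. lra.
Qed.

Lemma sin_approx_error_le x n0 :
  Rabs x <= 1/2 -> Rabs (sin x - sin_approx x (2 * n0 + 1)) <= (1/2) ^ n0.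
Proof.
  (* [sin_bound] only covers nonnegative arguments; the odd symmetry handles the rest. *)
  assert (Hpos : forall x, 0 <= x <= 1/2 ->
            Rabs (sin x - sin_approx x (2 * n0 + 1)) <= (1/2) ^ n0).
  { intros y Hy. pose proof PI_gt_3.
    destruct (sin_bound y n0) as [H1 H2]; try lra.
    replace (2 * (n0 + 1))%nat with (S (2 * n0 + 1)) in H2 by lia.
    unfold sin_approx in *. rewrite tech5 in H2.
    assert (Rabs (sin_term y (S (2 * n0 + 1))) <= (1/2) ^ n0).
    { unfold sin_term. eapply Rle_trans. apply (Rabs_alt_pow_div_fact_le y (1/2)).
      rewrite Rabs_right; lra. apply pow_half_antitone; lia. }
    pose proof (Rle_abs (sin_term y (S (2 * n0 + 1)))).
    unfold Rabs at 1; destruct Rcase_abs; lra. }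
  intros H. destruct (Rle_dec 0 x).
  - apply Hpos. rewrite Rabs_right in H; lra.
  - rewrite Rabs_left in H by lra.
    replace (sin x - sin_approx x (2 * n0 + 1)) with (- (sin (- x) - sin_approx (- x) (2 * n0 + 1))).
    + rewrite Rabs_Ropp. apply Hpos; lra.
    + rewrite sin_neg, sin_approx_opp. ring.
Qed.


Definition freq (g : nat -> Z) (l : nat) : R := IZR (g l) * PI.

(* Up to the factor [i^k], this is the [k]-th derivative of [trig_poly a g K]. *)
Definition trig_poly_moment a g K (k : nat) (t : R) : C :=
  trig_poly (fun l => Cmult (a l) (RtoC (freq g l ^ k))) g K t.

Lemma Csum_moment_expand a g K t (r : nat -> R) (e : nat -> nat) m :
  Csum (fun l => Cmult (Cmult (a l) (phi (g l) t)) (RtoC (Rsum (fun i => r i * freq g l ^ e i) m))) K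
  = Csum (fun i => Cmult (RtoC (r i)) (trig_poly_moment a g K (e i) t)) m.
Proof.
  rewrite (Csum_ext _ (fun l =>
    Csum (fun i => Cmult (Cmult (a l) (phi (g l) t)) (RtoC (r i * freq g l ^ e i))) m)).
  - rewrite Csum_swap. apply Csum_ext; intros i _.
    unfold trig_poly_moment, trig_poly. rewrite <- Csum_scal.
    apply Csum_ext; intros l _. destruct (a l), (phi (g l) t). unfold RtoC; Ceq.
  - intros l _. rewrite RtoC_Rsum, <- Csum_scal. auto.
Qed.

Lemma cos_approx_sub_1_expand G s n0 :
  cos_approx (G * s) (2 * n0 + 1) - 1 =
  Rsum (fun i => (if Nat.eq_dec i 0 then 0 else (-1) ^ i * (s ^ (2 * i) / INR (fact (2 * i))))
                 * G ^ (2 * i)) (S (2 * n0 + 1)).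
Proof.
  unfold cos_approx. rewrite sum_f_R0_Rsum.
  transitivity (Rsum (fun i => if Nat.eq_dec i 0 then 0 else cos_term (G * s) i) (S (2 * n0 + 1))).
  - rewrite Rsum_drop_first by lia.
    assert (cos_term (G * s) 0 = 1) by (unfold cos_term; simpl; field). lra.
  - apply Rsum_ext. intros i _. destruct (Nat.eq_dec i 0); [ring|].
    unfold cos_term. rewrite Rpow_mult_distr. field. apply INR_fact_neq_0.
Qed.

Lemma sin_approx_expand G s n0 :
  sin_approx (G * s) (2 * n0 + 1) =
  Rsum (fun i => ((-1) ^ i * (s ^ (2 * i + 1) / INR (fact (2 * i + 1)))) * G ^ (2 * i + 1))
       (S (2 * n0 + 1)).
Proof.
  unfold sin_approx. rewrite sum_f_R0_Rsum. apply Rsum_ext; intros i _.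
  unfold sin_term. rewrite Rpow_mult_distr. field. apply INR_fact_neq_0.
Qed.

Lemma Cmod_taylor_remainder_le a g K t s n0 :
  (forall l, (l < K)%nat -> Rabs (freq g l * s) <= 1/2) ->
  Cmod (Cplus
    (Csum (fun l => Cmult (Cmult (a l) (phi (g l) t))
                          (RtoC (cos (freq g l * s) - cos_approx (freq g l * s) (2 * n0 + 1)))) K)
    (Cmult Ci
      (Csum (fun l => Cmult (Cmult (a l) (phi (g l) t))
                            (RtoC (sin (freq g l * s) - sin_approx (freq g l * s) (2 * n0 + 1)))) K)))
  <= 2 * (1/2) ^ n0 * Rsum (fun l => Cmod (a l)) K.
Proof.
  intros Hx. eapply Rle_trans. apply Cmod_triangle. rewrite Cmod_mult, Cmod_Ci, Rmult_1_l.
  replace (2 * (1/2) ^ n0 * Rsum (fun l => Cmod (a l)) K) with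
    (Rsum (fun l => Cmod (a l) * (1/2) ^ n0) K + Rsum (fun l => Cmod (a l) * (1/2) ^ n0) K).
  2: { rewrite (Rsum_ext (fun l => Cmod (a l) * (1/2) ^ n0) (fun l => (1/2) ^ n0 * Cmod (a l)))
         by (intros; ring).
       rewrite Rsum_scal; ring. }
  apply Rplus_le_compat; eapply Rle_trans; try apply Cmod_Csum_le; apply Rsum_le; intros l Hl;
    rewrite !Cmod_mult, Cmod_phi, Cmod_R, Rmult_1_r; apply Rmult_le_compat_l; try apply Cmod_ge_0.
  - apply cos_approx_error_le. apply Hx; auto.
  - apply sin_approx_error_le. apply Hx; auto.
Qed.

(* Expanding [phi j (t + s) = phi j t * (cos (j pi s) + i sin (j pi s))] to order
   [2 n0 + 1] writes [T(t+s) - T(t)] as a combination of the moments [T_k(t)] with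
   coefficients of size [s^k / k!], plus the Taylor remainders. *)
Lemma Cmod_trig_poly_shift_le a g K t s h n0 :
  Rabs s <= h -> (forall l, (l < K)%nat -> Rabs (freq g l * s) <= 1/2) ->
  Cmod (Cminus (trig_poly a g K (t + s)) (trig_poly a g K t)) <=
  Rsum (fun k => if Nat.eq_dec k 0 then 0 else h ^ k * Cmod (trig_poly_moment a g K k t))
       (2 * S (2 * n0 + 1))
  + 2 * (1/2) ^ n0 * Rsum (fun l => Cmod (a l)) K.
Proof.
  intros Hs Hx.
  set (rc := fun i => if Nat.eq_dec i 0 then 0 else (-1) ^ i * (s ^ (2 * i) / INR (fact (2 * i)))).
  set (rs := fun i => (-1) ^ i * (s ^ (2 * i + 1) / INR (fact (2 * i + 1)))).
  set (x := fun l => freq g l * s).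
  set (w := fun l => Cmult (a l) (phi (g l) t)).
  set (mc := fun l => Rsum (fun i => rc i * freq g l ^ (2 * i)) (S (2 * n0 + 1))).
  set (ms := fun l => Rsum (fun i => rs i * freq g l ^ (2 * i + 1)) (S (2 * n0 + 1))).
  assert (Hdec : Cminus (trig_poly a g K (t + s)) (trig_poly a g K t) =
     Cplus (Cplus (Csum (fun l => Cmult (w l) (RtoC (mc l))) K)
                  (Cmult Ci (Csum (fun l => Cmult (w l) (RtoC (ms l))) K)))
           (Cplus (Csum (fun l => Cmult (w l)
                                   (RtoC (cos (x l) - cos_approx (x l) (2 * n0 + 1)))) K)
                  (Cmult Ci (Csum (fun l => Cmult (w l)
                                   (RtoC (sin (x l) - sin_approx (x l) (2 * n0 + 1)))) K)))).
  { unfold trig_poly. rewrite <- Csum_minus, <- !Csum_scal, <- !Csum_plus.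
    apply Csum_ext; intros l _. rewrite phi_add. unfold mc, ms, rc, rs.
    rewrite <- cos_approx_sub_1_expand, <- sin_approx_expand.
    unfold w, x, freq. destruct (a l), (phi (g l) t). unfold RtoC, Ci; Ceq. }
  assert (HCi : forall z, Cmod (Cmult Ci z) = Cmod z) by (intros; rewrite Cmod_mult, Cmod_Ci; ring).
  rewrite Hdec. unfold w, mc, ms. rewrite !Csum_moment_expand.
  eapply Rle_trans. apply Cmod_triangle. apply Rplus_le_compat.
  - eapply Rle_trans. apply Cmod_triangle. rewrite HCi.
    rewrite <- Rsum_pairs, Rsum_plus.
    apply Rplus_le_compat; apply Cmod_Csum_scal_le; intros i Hi.
    + unfold rc. destruct (Nat.eq_dec i 0); destruct (Nat.eq_dec (2 * i) 0); try lia.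
      * rewrite Rabs_R0; lra.
      * apply Rmult_le_compat_r. apply Cmod_ge_0. apply Rabs_alt_pow_div_fact_le; auto.
    + destruct (Nat.eq_dec (2 * i + 1) 0); [lia|]. apply Rmult_le_compat_r. apply Cmod_ge_0.
      apply Rabs_alt_pow_div_fact_le; auto.
  - apply Cmod_taylor_remainder_le; auto.
Qed.


Lemma Rsum_sqr_le_weighted (u lam : nat -> R) L : (forall k, (k < L)%nat -> 0 < lam k) ->
  (Rsum u L) ^ 2 <= Rsum lam L * Rsum (fun k => u k ^ 2 / lam k) L.
Proof.
  induction L; intros Hl; cbn [Rsum]; [lra|].
  assert (HS : 0 <= Rsum lam L) by (apply Rsum_nonneg; intros; apply Rlt_le, Hl; lia).
  assert (HT : 0 <= Rsum (fun k => u k ^ 2 / lam k) L)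
    by (apply Rsum_nonneg; intros; apply Rmult_le_pos;
        [apply pow2_ge_0|apply Rlt_le, Rinv_0_lt_compat, Hl; lia]).
  specialize (IHL (fun k Hk => Hl k ltac:(lia))). specialize (Hl L ltac:(lia)).
  set (U := Rsum u L) in *. set (S := Rsum lam L) in *.
  set (T := Rsum (fun k => u k ^ 2 / lam k) L) in *. set (v := u L) in *. set (l := lam L) in *.
  assert (Hcross : 2 * U * v <= S * (v ^ 2 / l) + l * T).
  { destruct (Req_dec S 0) as [H0|H0].
    - rewrite H0 in IHL. assert (U = 0) by nra. rewrite H, H0. nra.
    - assert (l * T >= l * (U ^ 2 / S)).
      { apply Rle_ge, Rmult_le_compat_l; [lra|]. apply (Rmult_le_reg_r S); [lra|].
        unfold Rdiv; rewrite Rmult_assoc, Rinv_l by lra. nra. }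
      assert (S * (v ^ 2 / l) + l * (U ^ 2 / S) - 2 * U * v = (S * v - l * U) ^ 2 / (l * S))
        by (field; lra).
      assert (0 <= (S * v - l * U) ^ 2 / (l * S))
        by (apply Rmult_le_pos; [apply pow2_ge_0|apply Rlt_le, Rinv_0_lt_compat; nra]).
      lra. }
  assert (v ^ 2 / l * l = v ^ 2) by (field; lra).
  replace ((S + l) * (T + v ^ 2 / l)) with (S * T + S * (v ^ 2 / l) + l * T + v ^ 2 / l * l) by ring.
  nra.
Qed.

Lemma Rsum_pow_half_le_2 L : Rsum (fun k => (1/2) ^ k) L <= 2.
Proof.
  assert (Hsum : forall L, Rsum (fun k => (1/2) ^ k) L = 2 - 2 * (1/2) ^ L).
  { induction L0; simpl; [lra|]. rewrite IHL0. lra. }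
  rewrite Hsum. pose proof (pow_le (1/2) L ltac:(lra)). lra.
Qed.

Lemma Rsum_pow_drop_first_le q L : 0 <= q <= 1/2 ->
  Rsum (fun k => if Nat.eq_dec k 0 then 0 else q ^ k) L <= 2 * q.
Proof.
  intros Hq. destruct L; [simpl; lra|].
  rewrite Rsum_drop_first by lia.
  assert (Hgeo : (1 - q) * Rsum (fun k => q ^ k) (S L) = 1 - q ^ S L).
  { clear. induction (S L); simpl; [lra|]. rewrite Rmult_plus_distr_l, IHn. ring. }
  assert (0 <= q ^ S L) by (apply pow_le; lra).
  assert (Rsum (fun k => q ^ k) (S L) <= 1 / (1 - q)).
  { apply (Rmult_le_reg_l (1 - q)); [lra|]. rewrite Hgeo. field_simplify; lra. }
  assert (1 / (1 - q) - 1 <= 2 * q).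
  { apply (Rmult_le_reg_l (1 - q)); [lra|]. field_simplify; [|lra]. nra. }
  change (Rsum (pow q) (S L)) with (Rsum (fun k => q ^ k) (S L)). simpl pow; lra.
Qed.

(* Expand [(Y - Z)^2] and use AM-GM: [2 Y Z <= d Y^2 + Z^2 / d]. *)
Lemma sqr_ge_of_triangle d X Y Z : 0 < d < 1 -> 0 <= X -> 0 <= Y -> 0 <= Z -> Y - Z <= X ->
  (1 - d) * Y ^ 2 - (1 / d) * Z ^ 2 <= X ^ 2.
Proof.
  intros Hd HX HY HZ H.
  assert (2 * Y * Z <= d * Y ^ 2 + Z ^ 2 / d).
  { assert (d * Y ^ 2 + Z ^ 2 / d - 2 * Y * Z = (d * Y - Z) ^ 2 / d) by (field; lra).
    assert (0 <= (d * Y - Z) ^ 2 / d)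
      by (apply Rmult_le_pos; [apply pow2_ge_0|apply Rlt_le, Rinv_0_lt_compat; lra]).
    lra. }
  assert (Z ^ 2 / d >= Z ^ 2).
  { unfold Rdiv. assert (1 <= / d) by (rewrite <- Rinv_1; apply Rinv_le_contravar; lra). nra. }
  destruct (Rle_dec Z Y).
  - assert ((Y - Z) ^ 2 <= X ^ 2) by (apply pow_incr; lra). unfold Rdiv in *. nra.
  - assert ((1 - d) * Y ^ 2 <= Z ^ 2) by nra. assert (0 <= X ^ 2) by apply pow2_ge_0.
    unfold Rdiv in *. nra.
Qed.

Lemma le_of_le_sub_geometric X Y C : 0 <= C -> (forall n, Y - C * (1/4) ^ n <= X) -> Y <= X.
Proof.
  intros HC H. destruct (Rle_dec Y X); auto. exfalso.
  destruct (pow_lt_1_zero (1/4) ltac:(rewrite Rabs_right; lra) ((Y - X) / (C + 1))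
              ltac:(apply Rdiv_lt_0_compat; lra)) as [n1 Hn].
  specialize (Hn n1 (Nat.le_refl n1)). specialize (H n1).
  rewrite Rabs_right in Hn by (apply Rle_ge, pow_le; lra).
  assert (0 <= (1/4) ^ n1) by (apply pow_le; lra).
  assert ((C + 1) * (1/4) ^ n1 < Y - X).
  { apply (Rmult_lt_compat_l (C + 1)) in Hn; [|lra].
    replace ((C + 1) * ((Y - X) / (C + 1))) with (Y - X) in Hn by (field; lra). lra. }
  nra.
Qed.

Lemma sqr_div_pow_half h A k : (h ^ k * A) ^ 2 / (1/2) ^ k = (2 * h ^ 2) ^ k * A ^ 2.
Proof.
  rewrite !Rpow_mult_distr, <- pow_mult, Nat.mul_comm, pow_mult.
  assert (0 < (1/2) ^ k) by (apply pow_lt; lra).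
  assert ((1/2) ^ k * 2 ^ k = 1)
    by (rewrite <- Rpow_mult_distr; replace (1/2 * 2) with 1 by lra; apply pow1).
  field_simplify; [|lra]. replace (2 ^ k) with (/ (1/2) ^ k). field; lra.
  apply (Rmult_eq_reg_l ((1/2) ^ k)); [|lra]. rewrite Rinv_r by lra. lra.
Qed.

(** * The Marcinkiewicz-Zygmund inequality *)

Definition moment_energy a g K (h : R) (L : nat) (t : R) : R :=
  Rsum (fun k => if Nat.eq_dec k 0 then 0
                 else (2 * h ^ 2) ^ k * Cmod (trig_poly_moment a g K k t) ^ 2) L.

(* Cauchy-Schwarz with the weights [(1/2)^k] turns the bound on [|T(t+s) - T(t)|] into one
   on its square, and [sqr_ge_of_triangle] then compares [|T(t+s)|^2] with [|T(t)|^2]. *)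
Lemma Cmod_trig_poly_shift_sqr_ge a g K t s h n0 d :
  0 < d < 1 -> Rabs s <= h -> (forall l, (l < K)%nat -> Rabs (freq g l * s) <= 1/2) ->
  (1 - d) * Cmod (trig_poly a g K t) ^ 2
  - (1 / d) * (4 * moment_energy a g K h (2 * S (2 * n0 + 1)) t
               + 2 * (2 * (1/2) ^ n0 * Rsum (fun l => Cmod (a l)) K) ^ 2)
  <= Cmod (trig_poly a g K (t + s)) ^ 2.
Proof.
  intros Hd Hs Hx.
  set (L := (2 * S (2 * n0 + 1))%nat).
  set (R := 2 * (1/2) ^ n0 * Rsum (fun l => Cmod (a l)) K).
  set (u := fun k => if Nat.eq_dec k 0 then 0 else h ^ k * Cmod (trig_poly_moment a g K k t)).
  set (Z := Cmod (Cminus (trig_poly a g K (t + s)) (trig_poly a g K t))).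
  assert (HZ : Z <= Rsum u L + R) by (apply Cmod_trig_poly_shift_le; auto).
  assert (Hh : 0 <= h) by (pose proof (Rabs_pos s); lra).
  assert (HR : 0 <= R).
  { unfold R. apply Rmult_le_pos; [apply Rmult_le_pos; [lra|apply pow_le; lra]|].
    apply Rsum_nonneg; intros; apply Cmod_ge_0. }
  assert (Hu : 0 <= Rsum u L).
  { apply Rsum_nonneg; intros k _. unfold u; destruct Nat.eq_dec; [lra|].
    apply Rmult_le_pos; [apply pow_le; lra|apply Cmod_ge_0]. }
  assert (Hu2 : (Rsum u L) ^ 2 <= 2 * moment_energy a g K h L t).
  { eapply Rle_trans. apply (Rsum_sqr_le_weighted u (fun k => (1/2) ^ k)).
    { intros; apply pow_lt; lra. }
    replace (Rsum (fun k => u k ^ 2 / (1/2) ^ k) L) with (moment_energy a g K h L t).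
    - apply Rmult_le_compat_r; [|apply Rsum_pow_half_le_2].
      apply Rsum_nonneg; intros k _. destruct (Nat.eq_dec k 0); [lra|].
      apply Rmult_le_pos; [apply pow_le; nra|apply pow2_ge_0].
    - apply Rsum_ext; intros k _. unfold u. destruct (Nat.eq_dec k 0).
      + field. apply pow_nonzero; lra.
      + symmetry; apply sqr_div_pow_half. }
  assert (HZ2 : Z ^ 2 <= 4 * moment_energy a g K h L t + 2 * R ^ 2).
  { assert (Z ^ 2 <= (Rsum u L + R) ^ 2) by (apply pow_incr; split; [apply Cmod_ge_0|auto]).
    assert (0 <= (Rsum u L - R) ^ 2) by apply pow2_ge_0. nra. }
  assert (Htri : Cmod (trig_poly a g K t) - Z <= Cmod (trig_poly a g K (t + s))).
  { unfold Z. set (T0 := trig_poly a g K t). set (T1 := trig_poly a g K (t + s)).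
    pose proof (Cmod_triangle T1 (Cminus T0 T1)) as H.
    replace (Cplus T1 (Cminus T0 T1)) with T0 in H by ring.
    replace (Cminus T0 T1) with (Copp (Cminus T1 T0)) in H by ring. rewrite Cmod_opp in H. lra. }
  pose proof (sqr_ge_of_triangle d _ _ Z Hd (Cmod_ge_0 _) (Cmod_ge_0 _) (Cmod_ge_0 _) Htri).
  assert ((1 / d) * Z ^ 2 <= (1 / d) * (4 * moment_energy a g K h L t + 2 * R ^ 2))
    by (apply Rmult_le_compat_l; auto; apply Rlt_le, Rdiv_lt_0_compat; lra).
  lra.
Qed.

(* By Parseval each moment has energy [2 sum_l |a_l|^2 |freq_l|^(2k) <= 2 W^(2k) sum_l |a_l|^2]. *)
Lemma is_RInt_moment_energy_le a g K h W L :
  (forall k l, (k < K)%nat -> (l < K)%nat -> g k = g l -> k = l) ->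
  (forall l, (l < K)%nat -> Rabs (freq g l) <= W) -> 2 * h ^ 2 * W ^ 2 <= 1/2 ->
  exists V, is_RInt (moment_energy a g K h L) (-1) 1 V /\
            V <= 4 * (2 * h ^ 2 * W ^ 2) * Rsum (fun k => Cmod (a k) ^ 2) K.
Proof.
  intros Hinj HW Hq.
  set (q := 2 * h ^ 2 * W ^ 2). set (S2 := Rsum (fun k => Cmod (a k) ^ 2) K).
  set (Sk := fun k => Rsum (fun l => Cmod (Cmult (a l) (RtoC (freq g l ^ k)))^2) K).
  exists (Rsum (fun k => if Nat.eq_dec k 0 then 0 else (2 * h ^ 2) ^ k * (2 * Sk k)) L). split.
  - apply is_RInt_Rsum. intros k Hk. destruct (Nat.eq_dec k 0).
    + apply is_RInt_R0.
    + apply is_RInt_Rscal. apply is_RInt_trig_poly_sqr; auto.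
  - assert (HS2 : 0 <= S2) by (apply Rsum_nonneg; intros; apply pow2_ge_0).
    assert (Hterm : forall k, (k < L)%nat ->
              (if Nat.eq_dec k 0 then 0 else (2 * h ^ 2) ^ k * (2 * Sk k))
              <= (2 * S2) * (if Nat.eq_dec k 0 then 0 else q ^ k)).
    { intros k _. destruct (Nat.eq_dec k 0); [lra|].
      assert (Sk k <= (W ^ 2) ^ k * S2).
      { unfold Sk, S2. rewrite <- Rsum_scal. apply Rsum_le; intros l Hl.
        rewrite Cmod_mult, Cmod_R, Rpow_mult_distr.
        assert (Rabs (freq g l ^ k) ^ 2 <= (W ^ 2) ^ k).
        { rewrite <- RPow_abs, <- pow_mult, Nat.mul_comm, pow_mult.
          apply pow_incr. split; [apply pow2_ge_0|].
          apply pow_incr. split; [apply Rabs_pos|]. apply HW; auto. }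
        assert (0 <= Cmod (a l) ^ 2) by apply pow2_ge_0. nra. }
      assert (0 <= (2 * h ^ 2) ^ k) by (apply pow_le; nra).
      assert ((2 * h ^ 2) ^ k * (W ^ 2) ^ k = q ^ k)
        by (unfold q; rewrite <- Rpow_mult_distr; f_equal; ring).
      assert ((2 * h ^ 2) ^ k * Sk k <= (2 * h ^ 2) ^ k * ((W ^ 2) ^ k * S2))
        by (apply Rmult_le_compat_l; auto).
      nra. }
    eapply Rle_trans. apply Rsum_le. apply Hterm. rewrite Rsum_scal.
    assert (Hq' : 0 <= q <= 1/2) by (unfold q; split; [nra|auto]).
    pose proof (Rsum_pow_drop_first_le q L Hq'). nra.
Qed.

Lemma Cmod_trig_poly_sqr_le_voronoi_sum tp N K g a h n0 d t :
  (0 < N)%nat -> 0 < h < 1 -> 0 < d < 1 -> Rbar_le (density tp N) (Finite (h / 4)) ->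
  (forall s, Rabs s <= h -> forall l, (l < K)%nat -> Rabs (freq g l * s) <= 1/2) ->
  -1 < t < 1 ->
  (1 - d) * Cmod (trig_poly a g K t) ^ 2
  - (1 / d) * (4 * moment_energy a g K h (2 * S (2 * n0 + 1)) t
               + 2 * (2 * (1/2) ^ n0 * Rsum (fun l => Cmod (a l)) K) ^ 2)
  <= Rsum (fun n => indicator (voronoi tp N n) t * Cmod (trig_poly a g K (tp n)) ^ 2) N.
Proof.
  intros HN Hh Hd Hdens Hx Ht.
  destruct (exists_voronoi_near tp N t (h / 4) HN ltac:(lra) Hdens Ht) as [n [Hn [Hv Hdist]]].
  assert (Hs : Rabs (tp n - t) <= h) by (rewrite Rabs_minus_sym; lra).
  eapply Rle_trans. { apply (Cmod_trig_poly_shift_sqr_ge a g K t (tp n - t) h n0 d); auto. }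
  replace (t + (tp n - t)) with (tp n) by ring.
  replace (Cmod (trig_poly a g K (tp n)) ^ 2)
    with (indicator (voronoi tp N n) t * Cmod (trig_poly a g K (tp n)) ^ 2)
    by (unfold indicator; destruct excluded_middle_informative; [ring|contradiction]).
  apply (Rsum_term_le (fun n => indicator (voronoi tp N n) t * Cmod (trig_poly a g K (tp n)) ^ 2));
    auto.
  intros m Hm. apply Rmult_le_pos; [|apply pow2_ge_0].
  unfold indicator; destruct excluded_middle_informative; lra.
Qed.

(* Integrate the comparison of [|T(t_n)|^2] with [|T(t)|^2] over each Voronoi cell; the
   Taylor order [n0] only enters through the remainder term. *)
Lemma sampling_sum_ge_approx eps h M N tp K g a n0 :
  0 < eps < 1 -> (0 < N)%nat ->
  (forall n, (n < N)%nat -> -1 <= tp n <= 1) ->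
  (forall n m, (n < N)%nat -> (m < N)%nat -> tp n = tp m -> n = m) ->
  0 < h < 1 -> INR M * PI * h = eps / 8 ->
  Rbar_le (density tp N) (Finite (h / 4)) ->
  (forall k, (k < K)%nat -> Rabs (IZR (g k)) <= INR M) ->
  (forall k l, (k < K)%nat -> (l < K)%nat -> g k = g l -> k = l) ->
  (1 - eps) * Rsum (fun k => Cmod (a k) ^ 2) K
  - 16 / eps * (Rsum (fun l => Cmod (a l)) K) ^ 2 * (1/4) ^ n0
  <= Rsum (fun n => tau tp N n * Cmod (trig_poly a g K (tp n)) ^ 2) N.
Proof.
  intros Heps HN Hrange Hinj Hh HWh Hdens Hg Hginj.
  set (W := INR M * PI). set (d := eps / 2). set (L := (2 * S (2 * n0 + 1))%nat).
  set (S2 := Rsum (fun k => Cmod (a k) ^ 2) K). set (Sa := Rsum (fun l => Cmod (a l)) K).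
  set (R := 2 * (1/2) ^ n0 * Sa).
  assert (HW : forall l, (l < K)%nat -> Rabs (freq g l) <= W).
  { intros l Hl. unfold freq, W. rewrite Rabs_mult, (Rabs_right PI) by (pose PI_gt_3; lra).
    apply Rmult_le_compat_r; [pose PI_gt_3; lra|]. apply Hg; auto. }
  assert (Hx : forall s, Rabs s <= h -> forall l, (l < K)%nat -> Rabs (freq g l * s) <= 1/2).
  { intros s Hs l Hl. rewrite Rabs_mult.
    assert (Rabs (freq g l) * Rabs s <= W * h) by (apply Rmult_le_compat; auto; apply Rabs_pos).
    unfold W in *. lra. }
  assert (Hq : 2 * h ^ 2 * W ^ 2 = eps ^ 2 / 32).
  { replace (2 * h ^ 2 * W ^ 2) with (2 * (W * h) ^ 2) by ring. unfold W. rewrite HWh. field. }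
  destruct (is_RInt_moment_energy_le a g K h W L Hginj HW ltac:(rewrite Hq; nra)) as [V [IV HV]].
  rewrite Hq in HV. fold S2 in HV.
  set (lower := fun t => (1 - d) * Cmod (trig_poly a g K t) ^ 2
                         - (1 / d) * (4 * moment_energy a g K h L t + 2 * R ^ 2)).
  set (F := fun t => Rsum (fun n => indicator (voronoi tp N n) t
                                    * Cmod (trig_poly a g K (tp n)) ^ 2) N).
  assert (Hpt : forall t, -1 < t < 1 -> lower t <= F t)
    by (intros; apply (Cmod_trig_poly_sqr_le_voronoi_sum tp N K g a h n0 d); auto; unfold d; lra).
  assert (IL : is_RInt lower (-1) 1 ((1 - d) * (2 * S2) - (1 / d) * (4 * V + (1 - -1) * (2 * R ^ 2)))).
  { apply is_RInt_Rminus; apply is_RInt_Rscal.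
    - apply is_RInt_trig_poly_sqr; auto.
    - apply is_RInt_Rplus; [apply is_RInt_Rscal; auto|apply is_RInt_Rconst]. }
  assert (IF : is_RInt F (-1) 1
                 (2 * Rsum (fun n => tau tp N n * Cmod (trig_poly a g K (tp n)) ^ 2) N))
    by apply (is_RInt_voronoi_weighted_sum tp N Hrange Hinj).
  assert (Hle : RInt lower (-1) 1 <= RInt F (-1) 1)
    by (apply RInt_le; [lra|eexists; eauto|eexists; eauto|auto]).
  rewrite (is_RInt_unique _ _ _ _ IL), (is_RInt_unique _ _ _ _ IF) in Hle.
  assert (HR2 : R ^ 2 = 4 * (1/4) ^ n0 * Sa ^ 2).
  { unfold R. rewrite !Rpow_mult_distr, <- pow_mult, Nat.mul_comm, pow_mult.
    replace ((1/2) ^ 2) with (1/4) by field. ring. }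
  assert (HV' : (1 / d) * (4 * V) <= eps * S2).
  { apply Rle_trans with ((1 / d) * (4 * (4 * (eps ^ 2 / 32) * S2))).
    - apply Rmult_le_compat_l; [apply Rlt_le, Rdiv_lt_0_compat; unfold d; lra|lra].
    - right. unfold d. field. lra. }
  assert ((1 / d) * ((1 - -1) * (2 * R ^ 2)) = 2 * (16 / eps * Sa ^ 2 * (1/4) ^ n0))
    by (rewrite HR2; unfold d; field; lra).
  unfold d in *. fold S2 Sa. nra.
Qed.

Lemma marcinkiewicz_zygmund eps M N tp K g a :
  0 < eps < 1 -> (0 < M)%nat -> (0 < N)%nat ->
  (forall n, (n < N)%nat -> -1 <= tp n <= 1) ->
  (forall n m, (n < N)%nat -> (m < N)%nat -> tp n = tp m -> n = m) ->
  Rbar_le (density tp N) (Finite (eps / (32 * PI) / INR M)) ->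
  (forall k, (k < K)%nat -> Rabs (IZR (g k)) <= INR M) ->
  (forall k l, (k < K)%nat -> (l < K)%nat -> g k = g l -> k = l) ->
  (1 - eps) * Rsum (fun k => Cmod (a k) ^ 2) K <=
  Rsum (fun n => tau tp N n * Cmod (trig_poly a g K (tp n)) ^ 2) N.
Proof.
  intros Heps HM HN Hrange Hinj Hdens Hg Hginj.
  pose proof PI_gt_3.
  assert (HM1 : 1 <= INR M) by (replace 1 with (INR 1) by auto; apply le_INR; lia).
  set (h := eps / (8 * PI * INR M)).
  assert (Hh : 0 < h < 1).
  { unfold h. split; [apply Rdiv_lt_0_compat; nra|].
    apply (Rmult_lt_reg_r (8 * PI * INR M)); [nra|].
    unfold Rdiv. rewrite Rmult_assoc, Rinv_l by nra. nra. }
  apply (le_of_le_sub_geometric _ _ (16 / eps * (Rsum (fun l => Cmod (a l)) K) ^ 2)).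
  { apply Rmult_le_pos. apply Rlt_le, Rdiv_lt_0_compat; lra. apply pow2_ge_0. }
  intros n0.
  apply (sampling_sum_ge_approx eps h M N tp K g a n0); auto.
  - unfold h. field. nra.
  - replace (h / 4) with (eps / (32 * PI) / INR M); auto. unfold h. field. nra.
Qed.

(** * Least squares in C^N *)

Section LeastSquares.
Variable N : nat.
Variable col : nat -> nat -> C.

Definition cinner (u v : nat -> C) : C := Csum (fun n => Cmult (Cconj (u n)) (v n)) N.
Definition sqnorm (u : nat -> C) : R := Rsum (fun n => Cmod (u n) ^ 2) N.
Definition mat_apply (K : nat) (b : nat -> C) (n : nat) : C :=
  Csum (fun k => Cmult (col k n) (b k)) K.

Lemma cinner_minus_r u v w : cinner u (fun n => Cminus (v n) (w n)) = Cminus (cinner u v) (cinner u w).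
Proof.
  unfold cinner. rewrite <- Csum_minus. apply Csum_ext; intros; ring.
Qed.

Lemma cinner_scal_r u v a : cinner u (fun n => Cmult a (v n)) = Cmult a (cinner u v).
Proof.
  unfold cinner. rewrite <- Csum_scal. apply Csum_ext; intros; ring.
Qed.

Lemma cinner_plus_l u w v : cinner (fun n => Cplus (u n) (w n)) v = Cplus (cinner u v) (cinner w v).
Proof.
  unfold cinner. rewrite <- Csum_plus. apply Csum_ext; intros; rewrite Cplus_conj; ring.
Qed.

Lemma cinner_mat_apply_l K w r :
  cinner (mat_apply K w) r = Csum (fun k => Cmult (Cconj (w k)) (cinner (col k) r)) K.
Proof.
  unfold cinner, mat_apply.
  rewrite (Csum_ext _ (fun n => Csum (fun k => Cmult (Cconj (w k)) (Cmult (Cconj (col k n)) (r n))) K)).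
  rewrite Csum_swap. apply Csum_ext; intros k _. rewrite <- Csum_scal. auto.
  intros n _. rewrite Csum_conj.
  rewrite Cmult_comm, <- Csum_scal. apply Csum_ext; intros k _. rewrite Cmult_conj. ring.
Qed.

Lemma cinner_self v : cinner v v = RtoC (sqnorm v).
Proof.
  unfold cinner, sqnorm. rewrite RtoC_Rsum. apply Csum_ext; intros n _.
  rewrite Cmod2_alt. destruct (v n) as [p q]. unfold Re, Im; simpl. unfold RtoC; Ceq.
Qed.

Lemma sqnorm_nonneg v : 0 <= sqnorm v.
Proof.
  apply Rsum_nonneg; intros; apply pow2_ge_0.
Qed.

Lemma sqnorm_minus u v :
  sqnorm (fun n => Cminus (u n) (v n)) = sqnorm u + sqnorm v - 2 * fst (cinner v u).
Proof.
  unfold sqnorm, cinner. rewrite Csum_re, <- Rsum_plus, <- Rsum_scal.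
  unfold Rminus. rewrite <- Rsum_opp, <- Rsum_plus.
  apply Rsum_ext; intros n _. rewrite !Cmod2_alt. destruct (u n), (v n); unfold Re, Im; simpl; ring.
Qed.

Lemma mat_apply_ext K b b' n :
  (forall k, (k < K)%nat -> b k = b' k) -> mat_apply K b n = mat_apply K b' n.
Proof.
  intros H. unfold mat_apply. apply Csum_ext; intros. rewrite H; auto.
Qed.

Lemma mat_apply_minus K b b' n :
  mat_apply K (fun k => Cminus (b k) (b' k)) n = Cminus (mat_apply K b n) (mat_apply K b' n).
Proof.
  unfold mat_apply. rewrite <- Csum_minus. apply Csum_ext; intros; ring.
Qed.

Lemma mat_apply_scal K c b n : mat_apply K (fun k => Cmult c (b k)) n = Cmult c (mat_apply K b n).
Proof. unfold mat_apply. rewrite <- Csum_scal. apply Csum_ext; intros; ring. Qed.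

Lemma mat_apply_S K b c n :
  mat_apply (S K) (fun k => if Nat.eq_dec k K then c else b k) n
  = Cplus (mat_apply K b n) (Cmult (col K n) c).
Proof.
  unfold mat_apply. simpl. destruct (Nat.eq_dec K K); [|congruence].
  f_equal. apply Csum_ext; intros k Hk. destruct (Nat.eq_dec k K); [lia|auto].
Qed.

(* Adding a column [col K], correct the residual [r] along the component [v] of [col K]
   orthogonal to the previous columns (if [v = 0], the old solution already works). *)
Lemma exists_orthogonal_residual K (y : nat -> C) : exists b : nat -> C,
  forall k, (k < K)%nat -> cinner (col k) (fun n => Cminus (y n) (mat_apply K b n)) = RtoC 0.
Proof.
  revert y. induction K; intros y.
  { exists (fun _ => RtoC 0). intros; lia. }
  destruct (IHK y) as [b Hb]. destruct (IHK (col K)) as [w Hw].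
  set (r := fun n => Cminus (y n) (mat_apply K b n)) in *.
  set (v := fun n => Cminus (col K n) (mat_apply K w n)) in *.
  assert (Hv_perp : forall u, (forall k, (k < K)%nat -> cinner (col k) u = RtoC 0) ->
                              cinner (col K) u = cinner v u).
  { intros u Hu. replace (cinner (col K) u) with (cinner (fun n => Cplus (v n) (mat_apply K w n)) u)
      by (unfold cinner; apply Csum_ext; intros; unfold v; f_equal; f_equal; ring).
    rewrite cinner_plus_l, cinner_mat_apply_l, Csum_zero; [ring|].
    intros k Hk. rewrite Hu; auto. ring. }
  set (al := if Req_EM_T (sqnorm v) 0 then RtoC 0 else Cdiv (cinner v r) (RtoC (sqnorm v))).
  exists (fun k => if Nat.eq_dec k K then al else Cminus (b k) (Cmult al (w k))).
  replace (fun n => Cminus (y n) (mat_apply (S K)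
             (fun k => if Nat.eq_dec k K then al else Cminus (b k) (Cmult al (w k))) n))
    with (fun n => Cminus (r n) (Cmult al (v n))).
  2: { apply functional_extensionality; intros n.
       rewrite mat_apply_S, mat_apply_minus, mat_apply_scal. unfold r, v. ring. }
  assert (Hlow : forall k, (k < K)%nat ->
                   cinner (col k) (fun n => Cminus (r n) (Cmult al (v n))) = RtoC 0).
  { intros k Hk. rewrite cinner_minus_r, cinner_scal_r, Hb, Hw by auto. ring. }
  intros k Hk. destruct (Nat.eq_dec k K); [subst k|apply Hlow; lia].
  rewrite (Hv_perp _ Hlow), cinner_minus_r, cinner_scal_r, cinner_self.
  unfold al. destruct (Req_EM_T (sqnorm v) 0) as [Hv0|Hv0].
  - assert (Hvr : cinner v r = RtoC 0).
    { unfold cinner. apply Csum_zero. intros n Hn.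
      rewrite (Rsum_Cmod_sqr_eq_0 v N Hv0 n Hn). unfold Cconj, RtoC; Ceq. }
    rewrite Hvr. ring.
  - field. intro Hc. apply Hv0. injection Hc; auto.
Qed.

Lemma exists_least_squares K (y : nat -> C) : exists b0 : nat -> C, forall b : nat -> C,
  sqnorm (fun n => Cminus (y n) (mat_apply K b n)) =
  sqnorm (fun n => Cminus (y n) (mat_apply K b0 n))
  + sqnorm (fun n => Cminus (mat_apply K b n) (mat_apply K b0 n)).
Proof.
  destruct (exists_orthogonal_residual K y) as [b0 Hb0]. exists b0. intros b.
  set (r := fun n => Cminus (y n) (mat_apply K b0 n)) in *.
  set (D := fun n => Cminus (mat_apply K b n) (mat_apply K b0 n)).
  replace (fun n => Cminus (y n) (mat_apply K b n)) with (fun n => Cminus (r n) (D n)).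
  2: { apply functional_extensionality; intros n; unfold r, D; ring. }
  rewrite sqnorm_minus.
  assert (cinner D r = RtoC 0).
  { replace D with (mat_apply K (fun k => Cminus (b k) (b0 k))).
    rewrite cinner_mat_apply_l. apply Csum_zero; intros k Hk. rewrite Hb0; auto. ring.
    apply functional_extensionality; intros n. unfold D. apply mat_apply_minus. }
  rewrite H. simpl. ring.
Qed.

Section Minimizer.
Variables (K : nat) (y b0 : nat -> C) (c : R).
Hypothesis Hlow : forall a, c * Rsum (fun k => Cmod (a k) ^ 2) K <= sqnorm (mat_apply K a).
Hypothesis Hpyth : forall b,
  sqnorm (fun n => Cminus (y n) (mat_apply K b n)) =
  sqnorm (fun n => Cminus (y n) (mat_apply K b0 n))
  + sqnorm (fun n => Cminus (mat_apply K b n) (mat_apply K b0 n)).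

Lemma least_squares_min b :
  sqnorm (fun n => Cminus (y n) (mat_apply K b0 n))
  <= sqnorm (fun n => Cminus (y n) (mat_apply K b n)).
Proof.
  rewrite (Hpyth b).
  pose proof (sqnorm_nonneg (fun n => Cminus (mat_apply K b n) (mat_apply K b0 n))). lra.
Qed.

Lemma least_squares_coef_error v :
  c * Rsum (fun k => Cmod (Cminus (v k) (b0 k)) ^ 2) K
  <= sqnorm (fun n => Cminus (y n) (mat_apply K v n))
     - sqnorm (fun n => Cminus (y n) (mat_apply K b0 n)).
Proof.
  pose proof (Hlow (fun k => Cminus (v k) (b0 k))) as H.
  replace (mat_apply K (fun k => Cminus (v k) (b0 k)))
    with (fun n => Cminus (mat_apply K v n) (mat_apply K b0 n)) in H
    by (apply functional_extensionality; intros n; symmetry; apply mat_apply_minus).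
  rewrite Hpyth. lra.
Qed.

Lemma least_squares_unique b : 0 < c ->
  sqnorm (fun n => Cminus (y n) (mat_apply K b n))
  <= sqnorm (fun n => Cminus (y n) (mat_apply K b0 n)) ->
  forall k, (k < K)%nat -> b k = b0 k.
Proof.
  intros Hc Hmin k Hk.
  pose proof (least_squares_coef_error b) as H.
  assert (Hs : Rsum (fun k => Cmod (Cminus (b k) (b0 k)) ^ 2) K = 0).
  { assert (0 <= Rsum (fun k => Cmod (Cminus (b k) (b0 k)) ^ 2) K)
      by (apply Rsum_nonneg; intros; apply pow2_ge_0).
    nra. }
  pose proof (Rsum_Cmod_sqr_eq_0 _ K Hs k Hk) as H0.
  replace (b k) with (Cplus (Cminus (b k) (b0 k)) (b0 k)) by ring. rewrite H0. ring.
Qed.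

End Minimizer.

End LeastSquares.



(** * Series indexed by Z *)

Lemma sum_n_Rsum (a : nat -> R) n : sum_n a n = Rsum a (S n).
Proof.
  induction n. { rewrite sum_O; simpl; lra. }
  rewrite sum_Sn, IHn. reflexivity.
Qed.

Lemma sum_n_Csum (a : nat -> C) n :
  @sum_n (NormedModule.AbelianMonoid C_AbsRing C_NormedModule) a n = Csum a (S n).
Proof.
  induction n. { rewrite sum_O; simpl. Ceq. }
  rewrite sum_Sn, IHn. reflexivity.
Qed.

Lemma Rsum_eventually_zero (a : nat -> R) m n :
  (forall k, (m <= k)%nat -> a k = 0) -> (m <= n)%nat -> Rsum a n = Rsum a m.
Proof.
  intros H Hn. replace n with (m + (n - m))%nat by lia. rewrite Rsum_split.
  rewrite (Rsum_zero (fun k => a (m + k)%nat)); [lra|]. intros; apply H; lia.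
Qed.

Lemma Csum_eventually_zero (a : nat -> C) m n :
  (forall k, (m <= k)%nat -> a k = RtoC 0) -> (m <= n)%nat -> Csum a n = Csum a m.
Proof.
  intros H Hn. replace n with (m + (n - m))%nat by lia. rewrite Csum_split.
  rewrite (Csum_zero (fun k => a (m + k)%nat)); [Ceq|]. intros; apply H; lia.
Qed.

Lemma is_series_eventually_zero_R (a : nat -> R) m :
  (forall k, (m <= k)%nat -> a k = 0) -> is_series a (Rsum a m).
Proof.
  intros H. unfold is_series.
  apply (filterlim_ext_loc (fun _ => Rsum a m)); [|apply filterlim_const].
  exists m. intros n Hn. rewrite sum_n_Rsum. symmetry. apply Rsum_eventually_zero; auto.
Qed.

Lemma is_series_eventually_zero_C (a : nat -> C) m :
  (forall k, (m <= k)%nat -> a k = RtoC 0) -> @is_series C_AbsRing C_NormedModule a (Csum a m).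
Proof.
  intros H. unfold is_series.
  apply (filterlim_ext_loc (fun _ => Csum a m)); [|apply filterlim_const].
  exists m. intros n Hn. rewrite sum_n_Csum. symmetry. apply Csum_eventually_zero; auto.
Qed.

Lemma Cmod_is_series_le (a : nat -> C) l : @is_series C_AbsRing C_NormedModule a l ->
  ex_series (fun n => Cmod (a n)) -> Cmod l <= Series (fun n => Cmod (a n)).
Proof.
  intros Ha Hm.
  assert (Hf : filterlim (fun n => Cmod (sum_n a n)) eventually (locally (Cmod l))).
  { assert (Hn : filterlim (fun n => norm (sum_n a n)) eventually (locally (norm l)))
      by (eapply filterlim_comp; [apply Ha|apply filterlim_norm]).
    exact Hn. }
  apply (filterlim_le (F := eventually) (fun n => Cmod (sum_n a n)) (sum_n (fun n => Cmod (a n)))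
           (Cmod l) (Series (fun n => Cmod (a n)))); [|exact Hf|exact (Series_correct _ Hm)].
  exists 0%nat. intros n _. rewrite sum_n_Csum, sum_n_Rsum. apply Cmod_Csum_le.
Qed.

Lemma Series_ge_term (a : nat -> R) m : (forall k, 0 <= a k) -> ex_series a -> a m <= Series a.
Proof.
  intros Hp He.
  assert (Hs : is_series (fun k => if Nat.eq_dec k m then a m else 0) (a m)).
  { pose proof (is_series_eventually_zero_R (fun k => if Nat.eq_dec k m then a m else 0) (S m)) as Hf.
    rewrite Rsum_kronecker in Hf by lia. apply Hf.
    intros k Hk; destruct Nat.eq_dec; [lia|auto]. }
  rewrite <- (is_series_unique _ _ Hs). apply Series_le; auto.
  intros n; destruct Nat.eq_dec; [subst|]; split; auto; lra.
Qed.

Lemma Series_nonneg (a : nat -> R) : (forall n, 0 <= a n) -> ex_series a -> 0 <= Series a.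
Proof. intros H He. eapply Rle_trans; [apply (H 0%nat)|apply Series_ge_term; auto]. Qed.

Lemma ex_series_le_R (a b : nat -> R) : (forall n, 0 <= a n <= b n) -> ex_series b -> ex_series a.
Proof.
  intros H Hb. apply (ex_series_le a b); auto. intros n. unfold norm; simpl.
  rewrite Rabs_right by (destruct (H n); lra). apply H.
Qed.


Definition widx (M k : nat) : Z := (Z.of_nat k - Z.of_nat M)%Z.
Definition in_window (M : nat) (j : Z) : Prop := (- Z.of_nat M <= j < Z.of_nat M)%Z.
Definition in_windowb (M : nat) (j : Z) : bool := andb (Z.leb (- Z.of_nat M) j) (Z.ltb j (Z.of_nat M)).

Definition of_window (M : nat) (b : nat -> C) (j : Z) : C :=
  if in_windowb M j then b (Z.to_nat (j + Z.of_nat M)) else RtoC 0.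

Lemma in_windowb_spec M j : reflect (in_window M j) (in_windowb M j).
Proof.
  unfold in_windowb, in_window. apply Bool.iff_reflect.
  rewrite Bool.andb_true_iff, Z.leb_le, Z.ltb_lt. tauto.
Qed.

Lemma widx_in_window M k : (k < 2 * M)%nat -> in_window M (widx M k).
Proof. unfold in_window, widx; lia. Qed.

Lemma widx_inj M k l : widx M k = widx M l -> k = l.
Proof. unfold widx; lia. Qed.

Lemma Rabs_widx_le M k : (k < 2 * M)%nat -> Rabs (IZR (widx M k)) <= INR M.
Proof. intros Hk. rewrite <- abs_IZR, INR_IZR_INZ. apply IZR_le. unfold widx; lia. Qed.

Lemma PM_in M x j : in_window M j -> PM M x j = x j.
Proof. intros H. unfold PM. fold (in_windowb M j). destruct (in_windowb_spec M j); tauto. Qed.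

Lemma PM_out M x j : ~ in_window M j -> PM M x j = RtoC 0.
Proof. intros H. unfold PM. fold (in_windowb M j). destruct (in_windowb_spec M j); tauto. Qed.

Lemma of_window_out M b j : ~ in_window M j -> of_window M b j = RtoC 0.
Proof. intros H. unfold of_window. destruct (in_windowb_spec M j); tauto. Qed.

Lemma of_window_widx M b k : (k < 2 * M)%nat -> of_window M b (widx M k) = b k.
Proof.
  intros Hk. unfold of_window. destruct (in_windowb_spec M (widx M k)) as [_|H].
  - f_equal. unfold widx; lia.
  - exfalso; apply H, widx_in_window; auto.
Qed.

Lemma of_window_supported M b : supported_in M (of_window M b).
Proof. intros j Hj. apply of_window_out. unfold in_window; lia. Qed.

Lemma supported_of_window M z : supported_in M z -> z = of_window M (fun k => z (widx M k)).
Proof.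
  intros H. apply functional_extensionality; intros j. unfold of_window.
  destruct (in_windowb_spec M j) as [Hj|Hj].
  - f_equal. unfold in_window, widx in *; lia.
  - apply H. unfold in_window in Hj; lia.
Qed.

Lemma Cmod_sub_PM_le M x j : Cmod (Cminus (x j) (PM M x j)) <= Cmod (x j).
Proof.
  destruct (in_windowb_spec M j).
  - rewrite PM_in; auto. replace (Cminus (x j) (x j)) with (RtoC 0) by ring.
    rewrite Cmod_0. apply Cmod_ge_0.
  - rewrite PM_out; auto. replace (Cminus (x j) (RtoC 0)) with (x j) by ring. lra.
Qed.

Lemma Rsum_widx (G : Z -> R) M :
  Rsum (fun k => G (widx M k)) (2 * M) =
  Rsum (fun k => G (Z.of_nat k)) M + Rsum (fun k => G (- Z.of_nat (S k))%Z) M.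
Proof.
  replace (2 * M)%nat with (M + M)%nat by lia. rewrite Rsum_split.
  rewrite (Rsum_ext (fun k => G (widx M (M + k))) (fun k => G (Z.of_nat k))).
  - rewrite <- (Rsum_rev (fun k => G (widx M k))).
    rewrite (Rsum_ext (fun k => G (widx M (M - 1 - k))) (fun k => G (- Z.of_nat (S k))%Z)); [lra|].
    intros k Hk; f_equal; unfold widx; lia.
  - intros k Hk; f_equal; unfold widx; lia.
Qed.

Lemma Csum_widx (G : Z -> C) M :
  Csum (fun k => G (widx M k)) (2 * M) =
  Cplus (Csum (fun k => G (Z.of_nat k)) M) (Csum (fun k => G (- Z.of_nat (S k))%Z) M).
Proof.
  apply injective_projections; simpl; rewrite ?Csum_re, ?Csum_im.
  - apply (Rsum_widx (fun j => fst (G j))).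
  - apply (Rsum_widx (fun j => snd (G j))).
Qed.

Lemma zSeriesR_window (G : Z -> R) M : (forall j, ~ in_window M j -> G j = 0) ->
  ex_zseriesR G /\ zSeriesR G = Rsum (fun k => G (widx M k)) (2 * M).
Proof.
  intros H.
  assert (H1 : is_series (fun k => G (Z.of_nat k)) (Rsum (fun k => G (Z.of_nat k)) M)).
  { apply is_series_eventually_zero_R. intros k Hk. apply H. unfold in_window; lia. }
  assert (H2 : is_series (fun k => G (- Z.of_nat (S k))%Z) (Rsum (fun k => G (- Z.of_nat (S k))%Z) M)).
  { apply is_series_eventually_zero_R. intros k Hk. apply H. unfold in_window; lia. }
  split. { split; eexists; eauto. }
  unfold zSeriesR. rewrite (is_series_unique _ _ H1), (is_series_unique _ _ H2), Rsum_widx; auto.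
Qed.

Lemma is_zsum_window (G : Z -> C) M : (forall j, ~ in_window M j -> G j = RtoC 0) ->
  is_zsum G (Csum (fun k => G (widx M k)) (2 * M)).
Proof.
  intros H. exists (Csum (fun k => G (Z.of_nat k)) M), (Csum (fun k => G (- Z.of_nat (S k))%Z) M).
  split; [|split].
  - apply is_series_eventually_zero_C. intros k Hk. apply H. unfold in_window; lia.
  - apply is_series_eventually_zero_C. intros k Hk. apply H. unfold in_window; lia.
  - apply Csum_widx.
Qed.

Lemma of_window_ext M b b' :
  (forall k, (k < 2 * M)%nat -> b k = b' k) -> of_window M b = of_window M b'.
Proof.
  intros H. apply functional_extensionality; intros j. unfold of_window.
  destruct (in_windowb_spec M j) as [Hj|]; auto. apply H. unfold in_window in Hj; lia.
Qed.


Definition colU (tp : nat -> R) (N M : nat) (k n : nat) : C := Umat tp N n (widx M k).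

Lemma residual_sqnorm tp N M z y :
  residual tp N M z y =
  sqrt (sqnorm N (fun n => Cminus (y n) (mat_apply (colU tp N M) (2 * M) (fun k => z (widx M k)) n))).
Proof.
  unfold residual, sqnorm. f_equal. apply Rsum_ext; intros n _.
  unfold UPM, mat_apply, colU, widx.
  rewrite <- Cmod_opp. f_equal. f_equal. ring.
Qed.

Lemma residual_of_window tp N M b y :
  residual tp N M (of_window M b) y =
  sqrt (sqnorm N (fun n => Cminus (y n) (mat_apply (colU tp N M) (2 * M) b n))).
Proof.
  rewrite residual_sqnorm. f_equal. unfold sqnorm. apply Rsum_ext; intros n _.
  do 3 f_equal. apply mat_apply_ext. intros; apply of_window_widx; auto.
Qed.

Lemma mat_apply_colU tp N M b n :
  mat_apply (colU tp N M) (2 * M) b n =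
  Cmult (RtoC (sqrt (tau tp N n))) (trig_poly b (widx M) (2 * M) (tp n)).
Proof. unfold mat_apply, trig_poly, colU, Umat. rewrite <- Csum_scal. apply Csum_ext; intros; ring. Qed.

Lemma sqnorm_mat_apply_colU tp N M b :
  (forall n, (n < N)%nat -> -1 <= tp n <= 1) ->
  (forall n m, (n < N)%nat -> (m < N)%nat -> tp n = tp m -> n = m) ->
  sqnorm N (mat_apply (colU tp N M) (2 * M) b) =
  Rsum (fun n => tau tp N n * Cmod (trig_poly b (widx M) (2 * M) (tp n)) ^ 2) N.
Proof.
  intros Hr Hi. unfold sqnorm. apply Rsum_ext; intros n Hn.
  rewrite mat_apply_colU, Cmod_mult, Cmod_R, Rpow_mult_distr, Rabs_right by (apply Rle_ge, sqrt_pos).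
  rewrite pow2_sqrt; auto. apply (tau_nonneg tp N Hr Hi n Hn).
Qed.

Lemma colU_lower_frame_bound eps M N tp :
  0 < eps < 1 -> (0 < M)%nat -> (0 < N)%nat ->
  (forall n, (n < N)%nat -> -1 <= tp n <= 1) ->
  (forall n m, (n < N)%nat -> (m < N)%nat -> tp n = tp m -> n = m) ->
  Rbar_le (density tp N) (Finite (eps / (32 * PI) / INR M)) ->
  forall a, (1 - eps) * Rsum (fun k => Cmod (a k) ^ 2) (2 * M)
            <= sqnorm N (mat_apply (colU tp N M) (2 * M) a).
Proof.
  intros. rewrite sqnorm_mat_apply_colU; auto.
  apply (marcinkiewicz_zygmund eps M N); auto.
  - apply Rabs_widx_le.
  - intros k l _ _. apply widx_inj.
Qed.

(* Both the exact sum [fval] and the windowed polynomial are sums over Z; their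
   difference is the series of [(x j - P_M x j) phi_j t], whose terms have modulus
   [|x j - P_M x j|]. *)
Lemma Cmod_sub_trig_poly_window_le M x t fval :
  ex_zseriesR (fun j => Cmod (x j)) ->
  is_zsum (fun j => Cmult (x j) (phi j t)) fval ->
  Cmod (Cminus fval (trig_poly (fun k => x (widx M k)) (widx M) (2 * M) t)) <=
  zSeriesR (fun j => Cmod (Cminus (x j) (PM M x j))).
Proof.
  intros [Hx1 Hx2] [s1 [s2 [H1 [H2 Heq]]]].
  set (G := fun j => Cmult (PM M x j) (phi j t)).
  assert (HG : is_zsum G (Csum (fun k => G (widx M k)) (2 * M))).
  { apply is_zsum_window. intros j Hj. unfold G. rewrite PM_out; auto. ring. }
  replace (trig_poly (fun k => x (widx M k)) (widx M) (2 * M) t)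
    with (Csum (fun k => G (widx M k)) (2 * M)).
  2: { unfold trig_poly, G. apply Csum_ext; intros k Hk. rewrite PM_in; auto.
       apply widx_in_window; auto. }
  destruct HG as [p1 [p2 [G1 [G2 Geq]]]]. rewrite Heq, Geq.
  set (d := fun j => Cmod (Cminus (x j) (PM M x j))).
  assert (Hpart : forall (g : nat -> Z) u v,
    @is_series C_AbsRing C_NormedModule (fun k => Cmult (x (g k)) (phi (g k) t)) u ->
    @is_series C_AbsRing C_NormedModule (fun k => G (g k)) v ->
    ex_series (fun k => Cmod (x (g k))) ->
    Cmod (Cminus u v) <= Series (fun k => d (g k))).
  { intros g u v Hu Hv He.
    assert (Hc : forall k, d (g k) = Cmod (plus (Cmult (x (g k)) (phi (g k) t)) (opp (G (g k))))).
    { intros k. unfold d, G. change (plus ?p (opp ?q)) with (Cminus p q).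
      replace (Cminus (Cmult (x (g k)) (phi (g k) t)) (Cmult (PM M x (g k)) (phi (g k) t)))
        with (Cmult (Cminus (x (g k)) (PM M x (g k))) (phi (g k) t)) by ring.
      rewrite Cmod_mult, Cmod_phi. ring. }
    pose proof (is_series_minus _ _ _ _ Hu Hv) as Huv.
    rewrite (Series_ext _ _ Hc). change (Cminus u v) with (plus u (opp v)).
    apply Cmod_is_series_le; auto.
    apply (ex_series_le_R _ (fun k => Cmod (x (g k)))); auto.
    intros k; rewrite <- Hc; split; [apply Cmod_ge_0|apply Cmod_sub_PM_le]. }
  replace (Cminus (Cplus s1 s2) (Cplus p1 p2)) with (Cplus (Cminus s1 p1) (Cminus s2 p2)) by ring.
  eapply Rle_trans. apply Cmod_triangle.
  apply Rplus_le_compat;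
    [apply (Hpart (fun k => Z.of_nat k))|apply (Hpart (fun k => - Z.of_nat (S k))%Z)]; auto.
Qed.

(** * The error estimate *)

Lemma sqrt_plus_le a b : 0 <= a -> 0 <= b -> sqrt (a + b) <= sqrt a + sqrt b.
Proof.
  intros Ha Hb. pose proof (sqrt_pos a). pose proof (sqrt_pos b).
  apply Rsqr_incr_0_var; [|lra]. rewrite Rsqr_sqrt by lra. unfold Rsqr.
  pose proof (sqrt_sqrt a Ha). pose proof (sqrt_sqrt b Hb). nra.
Qed.

Lemma sqrt_le_of_le_sqr a b : 0 <= a -> 0 <= b -> a <= b ^ 2 -> sqrt a <= b.
Proof. intros Ha Hb H. rewrite <- (sqrt_pow2 b Hb). apply sqrt_le_1_alt; auto. Qed.

Lemma Series_sqr_le (a : nat -> R) B : (forall k, 0 <= a k <= B) -> ex_series a ->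
  ex_series (fun k => a k ^ 2) /\ Series (fun k => a k ^ 2) <= Series a * B.
Proof.
  intros Ha He.
  assert (Hb : forall k, 0 <= a k ^ 2 <= a k * B)
    by (intros k; specialize (Ha k); split; [apply pow2_ge_0|nra]).
  assert (HeB : ex_series (fun k => a k * B)) by (apply ex_series_scal_r; auto).
  split. { apply (ex_series_le_R _ _ Hb HeB). }
  rewrite <- Series_scal_r. apply Series_le; auto.
Qed.

Lemma zSeriesR_nonneg (d : Z -> R) : (forall j, 0 <= d j) -> ex_zseriesR d -> 0 <= zSeriesR d.
Proof.
  intros Hd [E1 E2]. unfold zSeriesR.
  pose proof (Series_nonneg _ (fun k => Hd _) E1). pose proof (Series_nonneg _ (fun k => Hd _) E2). lra.
Qed.

Lemma zSeriesR_sqr_le (d : Z -> R) : (forall j, 0 <= d j) -> ex_zseriesR d ->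
  ex_zseriesR (fun j => d j ^ 2) /\ zSeriesR (fun j => d j ^ 2) <= zSeriesR d ^ 2.
Proof.
  intros Hd [E1 E2]. unfold ex_zseriesR, zSeriesR.
  set (D1 := Series (fun k => d (Z.of_nat k))). set (D2 := Series (fun k => d (- Z.of_nat (S k))%Z)).
  assert (HD1 : 0 <= D1) by (apply Series_nonneg; auto).
  assert (HD2 : 0 <= D2) by (apply Series_nonneg; auto).
  destruct (Series_sqr_le (fun k => d (Z.of_nat k)) (D1 + D2)) as [S1 HS1]; auto.
  { intros k. split; auto. pose proof (Series_ge_term (fun k => d (Z.of_nat k)) k (fun _ => Hd _) E1).
    fold D1 in H. lra. }
  destruct (Series_sqr_le (fun k => d (- Z.of_nat (S k))%Z) (D1 + D2)) as [S2 HS2]; auto.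
  { intros k. split; auto.
    pose proof (Series_ge_term (fun k => d (- Z.of_nat (S k))%Z) k (fun _ => Hd _) E2).
    fold D2 in H. lra. }
  split; auto. fold D1 in HS1. fold D2 in HS2. nra.
Qed.

Lemma ex_zseriesR_sub_PM M x :
  ex_zseriesR (fun j => Cmod (x j)) -> ex_zseriesR (fun j => Cmod (Cminus (x j) (PM M x j))).
Proof.
  intros [E1 E2]. split; [eapply ex_series_le_R, E1|eapply ex_series_le_R, E2];
    intros; split; apply Cmod_ge_0 || apply Cmod_sub_PM_le.
Qed.

(* Off the window the error is the tail [x - P_M x]; on it, it is [P_M x - xc], which has
   finite support; and the l^2 norm of the tail is bounded by its l^1 norm. *)
Lemma l2norm_sub_of_window_le M x b :
  ex_zseriesR (fun j => Cmod (x j)) ->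
  l2norm (fun j => Cminus (x j) (of_window M b j)) <=
  zSeriesR (fun j => Cmod (Cminus (x j) (PM M x j))) +
  sqrt (Rsum (fun k => Cmod (Cminus (x (widx M k)) (b k)) ^ 2) (2 * M)).
Proof.
  intros Hx.
  set (d := fun j => Cmod (Cminus (x j) (PM M x j))).
  set (E := fun j => Cmod (Cminus (PM M x j) (of_window M b j)) ^ 2).
  set (Q := Rsum (fun k => Cmod (Cminus (x (widx M k)) (b k)) ^ 2) (2 * M)).
  assert (Hsplit : forall j, Cmod (Cminus (x j) (of_window M b j)) ^ 2 = d j ^ 2 + E j).
  { intros j. unfold d, E. destruct (in_windowb_spec M j) as [Hj|Hj].
    - rewrite PM_in; auto. replace (Cminus (x j) (x j)) with (RtoC 0) by ring. rewrite Cmod_0. ring.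
    - rewrite PM_out, of_window_out; auto.
      replace (Cminus (RtoC 0) (RtoC 0)) with (RtoC 0) by ring.
      replace (Cminus (x j) (RtoC 0)) with (x j) by ring. rewrite Cmod_0. ring. }
  destruct (zSeriesR_window E M) as [[HE1 HE2] HEv].
  { intros j Hj. unfold E. rewrite PM_out, of_window_out; auto.
    replace (Cminus (RtoC 0) (RtoC 0)) with (RtoC 0) by ring. rewrite Cmod_0. ring. }
  assert (HQ : zSeriesR E = Q).
  { rewrite HEv. apply Rsum_ext; intros k Hk. unfold E.
    rewrite PM_in, of_window_widx; auto. apply widx_in_window; auto. }
  destruct (zSeriesR_sqr_le d (fun j => Cmod_ge_0 _) (ex_zseriesR_sub_PM M x Hx))
    as [[Hd1 Hd2] Hd].
  assert (HQ0 : 0 <= Q) by (apply Rsum_nonneg; intros; apply pow2_ge_0).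
  assert (HD0 : 0 <= zSeriesR d)
    by (apply zSeriesR_nonneg, ex_zseriesR_sub_PM; auto; intros; apply Cmod_ge_0).
  assert (H2 : 0 <= zSeriesR (fun j => d j ^ 2))
    by (apply zSeriesR_nonneg; [intros; apply pow2_ge_0|split; auto]).
  unfold l2norm.
  replace (zSeriesR (fun j => Cmod (Cminus (x j) (of_window M b j)) ^ 2))
    with (zSeriesR (fun j => d j ^ 2) + Q).
  2: { rewrite <- HQ. unfold zSeriesR. rewrite !(Series_ext _ _ (fun k => Hsplit _)).
       rewrite !Series_plus by auto. lra. }
  eapply Rle_trans. apply sqrt_plus_le; auto.
  pose proof (sqrt_le_of_le_sqr _ _ H2 HD0 Hd). fold d. lra.
Qed.

Lemma sqnorm_residual_window_le tp N M x f e y eta :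
  (forall n, (n < N)%nat -> -1 <= tp n <= 1) ->
  (forall n m, (n < N)%nat -> (m < N)%nat -> tp n = tp m -> n = m) ->
  ex_zseriesR (fun j => Cmod (x j)) ->
  (forall n, (n < N)%nat -> is_zsum (fun j => Cmult (x j) (phi j (tp n))) (f n)) ->
  (forall n, (n < N)%nat -> Cmod (e n) <= eta) ->
  (forall n, (n < N)%nat -> y n = Cmult (RtoC (sqrt (tau tp N n))) (Cplus (f n) (e n))) ->
  sqnorm N (fun n => Cminus (y n) (mat_apply (colU tp N M) (2 * M) (fun k => x (widx M k)) n))
  <= (zSeriesR (fun j => Cmod (Cminus (x j) (PM M x j))) + eta) ^ 2.
Proof.
  intros Hrange Hinj Hx Hf He Hy.
  set (D := zSeriesR (fun j => Cmod (Cminus (x j) (PM M x j)))).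
  apply Rle_trans with (Rsum (fun n => (D + eta) ^ 2 * tau tp N n) N).
  - apply Rsum_le; intros n Hn. pose proof (tau_nonneg tp N Hrange Hinj n Hn).
    rewrite Hy, mat_apply_colU by auto.
    set (T := trig_poly (fun k => x (widx M k)) (widx M) (2 * M) (tp n)).
    replace (Cminus (Cmult (RtoC (sqrt (tau tp N n))) (Cplus (f n) (e n)))
                    (Cmult (RtoC (sqrt (tau tp N n))) T))
      with (Cmult (RtoC (sqrt (tau tp N n))) (Cplus (Cminus (f n) T) (e n))) by ring.
    rewrite Cmod_mult, Cmod_R, Rabs_right, Rpow_mult_distr, pow2_sqrt by (auto; apply Rle_ge, sqrt_pos).
    rewrite Rmult_comm. apply Rmult_le_compat_r; auto.
    apply pow_incr. split; [apply Cmod_ge_0|].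
    eapply Rle_trans; [apply Cmod_triangle|]. apply Rplus_le_compat; auto.
    apply Cmod_sub_trig_poly_window_le; auto.
  - rewrite Rsum_scal. pose proof (Rsum_tau_le_1 tp N Hrange Hinj).
    change (Rsum (tau tp N) N) with (Rsum (fun n => tau tp N n) N).
    pose proof (pow2_ge_0 (D + eta)). nra.
Qed.

Lemma zSeriesR_sub_PM_le_w1norm M x w :
  (forall i, 1 <= w i) -> ex_zseriesR (fun j => Cmod (x j)) ->
  ex_zseriesR (fun j => w j * Cmod (Cminus (x j) (PM M x j))) ->
  zSeriesR (fun j => Cmod (Cminus (x j) (PM M x j))) <= w1norm w (fun j => Cminus (x j) (PM M x j)).
Proof.
  intros Hw Hx [Hw1 Hw2]. destruct (ex_zseriesR_sub_PM M x Hx) as [Ed1 Ed2].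
  unfold w1norm, zSeriesR. apply Rplus_le_compat; apply Series_le; auto; intros k;
    match goal with |- context [Cmod (Cminus (x ?j) _)] =>
      pose proof (Cmod_ge_0 (Cminus (x j) (PM M x j))); specialize (Hw j) end;
    split; nra.
Qed.

(* The coefficient error on the window is at most [(||x - P_M x||_1 + eta) / sqrt(1 - eps)]:
   the residual of the windowed coefficients of [x] bounds that of the minimizer. *)
Lemma least_squares_error_le eps tp N M x f e y eta w b0 :
  0 < eps < 1 -> 0 <= eta ->
  (forall n, (n < N)%nat -> -1 <= tp n <= 1) ->
  (forall n m, (n < N)%nat -> (m < N)%nat -> tp n = tp m -> n = m) ->
  ex_zseriesR (fun j => Cmod (x j)) ->
  (forall n, (n < N)%nat -> is_zsum (fun j => Cmult (x j) (phi j (tp n))) (f n)) ->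
  (forall n, (n < N)%nat -> Cmod (e n) <= eta) ->
  (forall n, (n < N)%nat -> y n = Cmult (RtoC (sqrt (tau tp N n))) (Cplus (f n) (e n))) ->
  (forall a, (1 - eps) * Rsum (fun k => Cmod (a k) ^ 2) (2 * M)
             <= sqnorm N (mat_apply (colU tp N M) (2 * M) a)) ->
  (forall b, sqnorm N (fun n => Cminus (y n) (mat_apply (colU tp N M) (2 * M) b n)) =
             sqnorm N (fun n => Cminus (y n) (mat_apply (colU tp N M) (2 * M) b0 n))
             + sqnorm N (fun n => Cminus (mat_apply (colU tp N M) (2 * M) b n)
                                         (mat_apply (colU tp N M) (2 * M) b0 n))) ->
  (forall i, 1 <= w i) ->
  ex_zseriesR (fun j => w j * Cmod (Cminus (x j) (PM M x j))) ->
  l2norm (fun j => Cminus (x j) (of_window M b0 j)) <=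
  (1 + 1 / sqrt (1 - eps)) * w1norm w (fun j => Cminus (x j) (PM M x j)) + 1 / sqrt (1 - eps) * eta.
Proof.
  intros Heps Heta Hrange Hinj Hx Hf He Hy Hlow Hpyth Hw Hws.
  set (D := zSeriesR (fun j => Cmod (Cminus (x j) (PM M x j)))).
  set (W1 := w1norm w (fun j => Cminus (x j) (PM M x j))).
  set (Q := Rsum (fun k => Cmod (Cminus (x (widx M k)) (b0 k)) ^ 2) (2 * M)).
  assert (HDW : D <= W1) by (apply zSeriesR_sub_PM_le_w1norm; auto).
  assert (HD0 : 0 <= D)
    by (apply zSeriesR_nonneg, ex_zseriesR_sub_PM; auto; intros; apply Cmod_ge_0).
  assert (HQ : (1 - eps) * Q <= (D + eta) ^ 2).
  { pose proof (least_squares_coef_error N (colU tp N M) (2 * M) y b0 (1 - eps) Hlow Hpyth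
                  (fun k => x (widx M k))) as H1.
    pose proof (sqnorm_residual_window_le tp N M x f e y eta Hrange Hinj Hx Hf He Hy) as H2.
    pose proof (sqnorm_nonneg N (fun n => Cminus (y n) (mat_apply (colU tp N M) (2 * M) b0 n))).
    cbv beta in H1. fold Q in H1. fold D in H2. lra. }
  assert (Hs : 0 < sqrt (1 - eps)) by (apply sqrt_lt_R0; lra).
  assert (HsQ : sqrt Q <= (D + eta) / sqrt (1 - eps)).
  { apply sqrt_le_of_le_sqr; [apply Rsum_nonneg; intros; apply pow2_ge_0|apply Rdiv_le_0_compat; lra|].
    unfold Rdiv. rewrite Rpow_mult_distr, pow_inv, pow2_sqrt by lra.
    apply (Rmult_le_reg_r (1 - eps)); [lra|]. rewrite Rmult_assoc, Rinv_l by lra. lra. }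
  eapply Rle_trans. { apply l2norm_sub_of_window_le; auto. }
  fold D Q.
  assert ((D + eta) / sqrt (1 - eps) <= (W1 + eta) / sqrt (1 - eps))
    by (unfold Rdiv; apply Rmult_le_compat_r; [apply Rlt_le, Rinv_0_lt_compat|]; lra).
  assert ((W1 + eta) / sqrt (1 - eps) = 1 / sqrt (1 - eps) * W1 + 1 / sqrt (1 - eps) * eta)
    by (field; lra).
  lra.
Qed.

Theorem theorem8p2 :
  forall eps : R, 0 < eps < 1 ->
  exists c : R, 0 < c /\
  forall (M N : nat) (tp : nat -> R),
    (0 < M)%nat -> (0 < N)%nat ->
    (forall n, (n < N)%nat -> -1 <= tp n <= 1) ->
    (forall n m, (n < N)%nat -> (m < N)%nat -> tp n = tp m -> n = m) ->
    Rbar_le (density tp N) (Finite (c / INR M)) ->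
  forall (x : Z -> C) (f : nat -> C) (e : nat -> C) (y : nat -> C) (eta : R),
    ex_zseriesR (fun j => Cmod (x j)) ->
    (forall n, (n < N)%nat -> is_zsum (fun j => Cmult (x j) (phi j (tp n))) (f n)) ->
    (forall n, (n < N)%nat -> Cmod (e n) <= eta) ->
    (forall n, (n < N)%nat ->
       y n = Cmult (RtoC (sqrt (tau tp N n))) (Cplus (f n) (e n))) ->
    exists xc : Z -> C,
      supported_in M xc /\
      (forall z, supported_in M z -> residual tp N M xc y <= residual tp N M z y) /\
      (forall z, supported_in M z ->
         (forall z', supported_in M z' -> residual tp N M z y <= residual tp N M z' y) ->
         z = xc) /\
      (forall w : Z -> R, (forall i, 1 <= w i) ->
         ex_zseriesR (fun j => w j * Cmod (Cminus (x j) (PM M x j))) ->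
         l2norm (fun j => Cminus (x j) (xc j)) <=
           (1 + 1 / sqrt (1 - eps)) * w1norm w (fun j => Cminus (x j) (PM M x j))
           + 1 / sqrt (1 - eps) * eta).
Proof.
  intros eps Heps. exists (eps / (32 * PI)).
  split. { apply Rdiv_lt_0_compat; [|pose proof PI_gt_3]; lra. }
  intros M N tp HM HN Hrange Hinj Hdens x f e y eta Hx Hf He Hy.
  destruct (exists_least_squares N (colU tp N M) (2 * M) y) as [b0 Hb0].
  pose proof (colU_lower_frame_bound eps M N tp Heps HM HN Hrange Hinj Hdens) as Hlow.
  exists (of_window M b0). split; [apply of_window_supported|split; [|split]].
  - intros z Hz. rewrite residual_of_window, residual_sqnorm. apply sqrt_le_1_alt.
    apply (least_squares_min N (colU tp N M) (2 * M) y b0 Hb0).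
  - intros z Hz Hmin. specialize (Hmin _ (of_window_supported M b0)).
    rewrite residual_of_window, residual_sqnorm in Hmin.
    apply sqrt_le_0 in Hmin; try apply sqnorm_nonneg.
    rewrite (supported_of_window M z Hz). apply of_window_ext.
    apply (least_squares_unique N (colU tp N M) (2 * M) y b0 (1 - eps)); auto; lra.
  - intros w Hw Hws. apply (least_squares_error_le eps tp N M x f e y eta w b0); auto.
    eapply Rle_trans; [apply Cmod_ge_0|apply (He 0%nat HN)].
Qed.
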